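(* Let $m/n\in(0,1/2]$, $k\in\{0,\dots,m-1\}$ and $\gamma\in\{A,B\}$ (with $\gamma=B$ if $k=0$). An element $d=((N_r),\pi,(A,B,C))$ of $\mathcal D_n$ equals $d(P)$ for some $P\in\mathcal P(m/n,k,\gamma)$ if and only if: (a) for all $r>0$: (i) $\pi_1(r,s)=r+_nm$ for all $s$, and $\pi_2(r,s)$ is increasing in $s$; (ii) $\pi_2(r,0)=0$; (b) for $r=0$: (i) $0\in\gamma$; (ii) $\pi_1(0,0)=k$; (iii) if $c$ is the unique element of $C$ then $\pi(0,c)=(m,0)$; (iv) $\pi_1(0,s)\in\{k,\dots,m\}$ for all $s$ and is increasing in $s$; (v) if $s_1<s_2$, $\pi_1(0,s_1)=\pi_1(0,s_2)$ and $s_1\in B\cup C$, then $s_2\in B$; (vi) if $s_1<s_2$, $\pi_1(0,s_1)=\pi_1(0,s_2)$ and $s_1,s_2\in A$ (resp. $s_1,s_2\in B$), then $\pi_2(0,s_1)>\pi_2(0,s_2)$ (resp. $\pi_2(0,s_1)<\pi_2(0,s_2)$).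
   Context: For $n\ge2$, $\Gamma_n$ is an $n$-star with edges $e_0,\dots,e_{n-1}$ (initial points of valence 1, final points meeting at a central vertex $v$, cyclically ordered by index). For $m/n\in(0,1/2]$ in lowest terms, $f_{m/n}\colon\Gamma_n\to\Gamma_n$ has $f_{m/n}(e_0)=e_0\bar e_1e_1\cdots\bar e_me_m$ and $f_{m/n}(e_r)=e_{r+_nm}$ for $r\ne0$, expanding uniformly away from preimages of vertices. A $\ast$-orbit is a periodic orbit $P$ of $f_{m/n}$ with $P\ne\{v\}$, $P\cap e_r\ne\emptyset$ for all $r$, $f_{m/n}(P\cap e_0)\not\subseteq e_m$, and $f_{m/n}(p_r)=p_{r+_nm}$ for all $r\ne0$, where $p_r$ is the point of $P\cap e_r$ closest to the initial point of $e_r$. The span $\Gamma_n^P$ is the smallest connected set containing $P$; the truncation is $f^P_{m/n}=r_P\circ f_{m/n}\colon\Gamma^P_n\to\Gamma^P_n$ where $r_P$ is the identity on $\Gamma^P_n$ and sends $x\notin\Gamma^P_n$ to the endpoint of $\Gamma^P_n$ on the edge containing $x$. $\mathcal D_n$ is the set of triples $((N_0,\dots,N_{n-1}),\pi,(A,B,C))$ with each $N_r$ a positive integer, $\pi$ a cyclic permutation of $\mathcal L=\{(r,s)\colon0\le r<n,\,0\le s<N_r\}$, and $(A,B,C)$ a partition of $\{0,\dots,N_0-1\}$ with $\#C=1$. For a $\ast$-orbit $P$, its data $d(P)$ is given by $N_r=\#(P\cap e_r)$; the points of $P\cap e_r$ are labelled $(r,0),\dots,(r,N_r-1)$ from the initial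 to the final point of $e_r$, and $\pi=f_{m/n}|_P$ in this labelling; $s\in A$, $B$ or $C$ according as $f^P_{m/n}$ is locally orientation-reversing, locally orientation-preserving, or not locally injective at $(0,s)$. $\mathcal P(m/n,k,\gamma)$ is the set of $\ast$-orbits with $f_{m/n}((0,0))\in e_k$ and $0\in\gamma$. Write $\tau_1,\tau_2$ for the projections of $\mathcal L$ to the first and second coordinates, $\pi_1=\tau_1\circ\pi$, $\pi_2=\tau_2\circ\pi$. *)

From Stdlib Require Import Reals Lra Lia Arith.
Open Scope R_scope.

(* A point is either the central vertex v ([Vc]) or the point of edge e_r
   at position t in [0,1): t = 0 is the initial (valence-1) point of e_r,
   and t -> 1 approaches the central vertex v (position 1). *)
Inductive pt : Type := Vc | Ed (r : nat) (t : R).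

Definition valid (n : nat) (p : pt) : Prop :=
  match p with Vc => True | Ed r t => (r < n)%nat /\ 0 <= t < 1 end.

Definition pos (p : pt) : R := match p with Vc => 1 | Ed _ t => t end.

Definition on_edge (r : nat) (p : pt) : Prop := p = Vc \/ exists t, p = Ed r t.

Definition mkpt (i : nat) (s : R) : pt :=
  if Req_EM_T s 1 then Vc else Ed i s.

Definition floorN (x : R) : nat := Z.to_nat (Int_part x).

(* f_{m/n}: e_r -> e_{r+_n m} isometrically for r <> 0; e_0 is cut into 2m+1
   equal pieces mapped linearly onto e_0, ebar_1, e_1, ..., ebar_m, e_m. *)
Definition fmap (n m : nat) (p : pt) : pt :=
  match p with
  | Vc => Vc
  | Ed O t =>
      let x := INR (2 * m + 1) * t in
      let j := floorN x in
      let u := x - INR j in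
      if Nat.eqb j 0 then Ed 0 u
      else if Nat.odd j then mkpt ((j + 1) / 2) (1 - u)
      else Ed (j / 2) u
  | Ed r t => mkpt ((r + m) mod n) t
  end.

Definition periodic_orbit (n m : nat) (P : pt -> Prop) : Prop :=
  exists x per, valid n x /\ (0 < per)%nat /\ Nat.iter per (fmap n m) x = x /\
    forall y, P y <-> exists j, y = Nat.iter j (fmap n m) x.

Definition is_first (P : pt -> Prop) (r : nat) (p : pt) : Prop :=
  P p /\ on_edge r p /\ forall q, P q -> on_edge r q -> pos p <= pos q.

Definition star_orbit (n m : nat) (P : pt -> Prop) : Prop :=
  periodic_orbit n m P /\
  ~ (forall y, P y <-> y = Vc) /\
  (forall r, (r < n)%nat -> exists p, P p /\ on_edge r p) /\
  (exists p, P p /\ on_edge 0 p /\ ~ on_edge m (fmap n m p)) /\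
  (forall r p, (0 < r < n)%nat -> is_first P r p ->
       is_first P ((r + m) mod n) (fmap n m p)).

Definition same_edge (p q : pt) : Prop :=
  exists r a b, p = Ed r a /\ q = Ed r b.

Definition on_seg_to_v (p x : pt) : Prop :=
  x = Vc \/ exists r a c, p = Ed r a /\ x = Ed r c /\ a <= c.

Definition between (p q x : pt) : Prop :=
  (exists r a b c, p = Ed r a /\ q = Ed r b /\ x = Ed r c /\
       Rmin a b <= c <= Rmax a b) \/
  (~ same_edge p q /\ (on_seg_to_v p x \/ on_seg_to_v q x)).

(* Gamma_n^P : smallest connected set containing P = union of arcs between
   points of P (the star is a tree) *)
Definition span (n : nat) (P : pt -> Prop) (x : pt) : Prop :=
  valid n x /\ (P x \/ exists p q, P p /\ P q /\ between p q x).

Definition endpoint_on_edge (n : nat) (P : pt -> Prop) (r : nat) (y : pt) : Prop :=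
  span n P y /\
  ((y = Vc /\ forall c, ~ span n P (Ed r c)) \/
   (exists t', y = Ed r t' /\ forall c, span n P (Ed r c) -> t' <= c)).

Definition retr (n : nat) (P : pt -> Prop) (x y : pt) : Prop :=
  (span n P x /\ y = x) \/
  (~ span n P x /\ exists r t, x = Ed r t /\ endpoint_on_edge n P r y).

Definition fP (n m : nat) (P : pt -> Prop) (x y : pt) : Prop :=
  span n P x /\ retr n P (fmap n m x) y.

(* local behaviour of f^P at a point p = (0,t0) of e_0, w.r.t. the
   orientations of the edges (initial point -> v) *)
Definition loc_pres (n m : nat) (P : pt -> Prop) (p : pt) : Prop :=
  exists t0, p = Ed 0 t0 /\ exists delta, 0 < delta /\ exists j,
    forall t t' y y', span n P (Ed 0 t) -> span n P (Ed 0 t') ->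
      Rabs (t - t0) < delta -> Rabs (t' - t0) < delta -> t < t' ->
      fP n m P (Ed 0 t) y -> fP n m P (Ed 0 t') y' ->
      exists a b, y = Ed j a /\ y' = Ed j b /\ a < b.

Definition loc_rev (n m : nat) (P : pt -> Prop) (p : pt) : Prop :=
  exists t0, p = Ed 0 t0 /\ exists delta, 0 < delta /\ exists j,
    forall t t' y y', span n P (Ed 0 t) -> span n P (Ed 0 t') ->
      Rabs (t - t0) < delta -> Rabs (t' - t0) < delta -> t < t' ->
      fP n m P (Ed 0 t) y -> fP n m P (Ed 0 t') y' ->
      exists a b, y = Ed j a /\ y' = Ed j b /\ a > b.

Definition loc_noninj (n m : nat) (P : pt -> Prop) (p : pt) : Prop :=
  exists t0, p = Ed 0 t0 /\ forall delta, 0 < delta ->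
    exists t t' y, span n P (Ed 0 t) /\ span n P (Ed 0 t') /\
      Rabs (t - t0) < delta /\ Rabs (t' - t0) < delta /\ t <> t' /\
      fP n m P (Ed 0 t) y /\ fP n m P (Ed 0 t') y.

Inductive cls : Type := cA | cB | cC.

Definition behaves (n m : nat) (P : pt -> Prop) (g : cls) (p : pt) : Prop :=
  match g with
  | cA => loc_rev n m P p
  | cB => loc_pres n m P p
  | cC => loc_noninj n m P p
  end.

(* N r = N_r (relevant for r < n); pi is the permutation of
   L = {(r,s) : r < n, s < N_r}; lab s in {cA,cB,cC} says whether s is in
   A, B or C (relevant for s < N_0). Values outside L are irrelevant. *)
Record data : Type := Data { dN : nat -> nat; dpi : nat * nat -> nat * nat;
                             dlab : nat -> cls }.

Definition inL (n : nat) (d : data) (x : nat * nat) : Prop :=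
  (fst x < n)%nat /\ (snd x < dN d (fst x))%nat.

Definition in_Dn (n : nat) (d : data) : Prop :=
  (forall r, (r < n)%nat -> (0 < dN d r)%nat) /\
  (forall x, inL n d x -> inL n d (dpi d x)) /\
  (forall x y, inL n d x -> inL n d y -> dpi d x = dpi d y -> x = y) /\
  (forall x y, inL n d x -> inL n d y -> exists j, Nat.iter j (dpi d) x = y) /\
  (exists c, (c < dN d 0%nat)%nat /\ dlab d c = cC /\
     forall c', (c' < dN d 0%nat)%nat -> dlab d c' = cC -> c' = c).

(* d = d(P): lbl r s is the point labelled (r,s) *)
Definition data_of (n m : nat) (P : pt -> Prop) (d : data) : Prop :=
  exists lbl : nat -> nat -> pt,
    (forall r s, (r < n)%nat -> (s < dN d r)%nat ->
        P (lbl r s) /\ exists t, lbl r s = Ed r t) /\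
    (forall r s s', (r < n)%nat -> (s < s')%nat -> (s' < dN d r)%nat ->
        pos (lbl r s) < pos (lbl r s')) /\
    (forall r y, (r < n)%nat -> P y -> on_edge r y ->
        exists s, (s < dN d r)%nat /\ y = lbl r s) /\
    (forall r s, (r < n)%nat -> (s < dN d r)%nat ->
        fmap n m (lbl r s) = lbl (fst (dpi d (r, s))) (snd (dpi d (r, s)))) /\
    (forall s, (s < dN d 0%nat)%nat -> forall g,
        dlab d s = g <-> behaves n m P g (lbl 0%nat s)).

Definition in_calP (n m k : nat) (g : cls) (P : pt -> Prop) : Prop :=
  star_orbit n m P /\
  forall p, is_first P 0 p -> on_edge k (fmap n m p) /\ behaves n m P g p.

Definition cond_ab (n m k : nat) (g : cls) (d : data) : Prop :=
  let N := dN d in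
  let pi1 x := fst (dpi d x) in
  let pi2 x := snd (dpi d x) in
  (forall r, (0 < r < n)%nat ->
     (forall s, (s < N r)%nat -> pi1 (r, s) = ((r + m) mod n)%nat) /\
     (forall s1 s2, (s1 < s2)%nat -> (s2 < N r)%nat -> (pi2 (r, s1) < pi2 (r, s2))%nat) /\
     pi2 (r, 0%nat) = 0%nat) /\
  dlab d 0%nat = g /\
  pi1 (0%nat, 0%nat) = k /\
  (forall c, (c < N 0%nat)%nat -> dlab d c = cC -> dpi d (0%nat, c) = (m, 0%nat)) /\
  (forall s, (s < N 0%nat)%nat -> (k <= pi1 (0%nat, s) <= m)%nat) /\
  (forall s1 s2, (s1 < s2)%nat -> (s2 < N 0%nat)%nat -> (pi1 (0%nat, s1) <= pi1 (0%nat, s2))%nat) /\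
  (forall s1 s2, (s1 < s2)%nat -> (s2 < N 0%nat)%nat -> pi1 (0%nat, s1) = pi1 (0%nat, s2) ->
      (dlab d s1 = cB \/ dlab d s1 = cC) -> dlab d s2 = cB) /\
  (forall s1 s2, (s1 < s2)%nat -> (s2 < N 0%nat)%nat -> pi1 (0%nat, s1) = pi1 (0%nat, s2) ->
      (dlab d s1 = cA -> dlab d s2 = cA -> (pi2 (0%nat, s1) > pi2 (0%nat, s2))%nat) /\
      (dlab d s1 = cB -> dlab d s2 = cB -> (pi2 (0%nat, s1) < pi2 (0%nat, s2))%nat)).

(* The data of a *-orbit are read off locally.  Off [e_0] the map is an isometry onto
   the next edge, so it preserves the order of the points and sends first points to first
   points: this is (a).  On [e_0] it is affine of slope [2m+1] on each of [2m+1] pieces,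
   which go backwards onto [e_j] (piece [2j-1]) or forwards (piece [2j]); the truncation
   only matters for a point sent to the first point of its edge, which becomes a fold.  So
   [A], [B], [C] consist of the points in odd pieces, in even pieces, and sent to a first
   point, and (b) follows.

   Conversely, (b) dictates the piece of each label [(0,s)], except that the fold label [c]
   may sit in piece [2m-1] or [2m].  Positions are the unique fixed point of the induced
   affine dynamics around the cycle of [pi], which expands by [2m+1] at each visit of
   [e_0]; expansion keeps every position inside [[0,1]], inside its piece and in the order
   of the labels.  Equal positions of two labels would propagate to a shift symmetry of the
   cycle that fixes the piece of [c], which cannot happen for both choices of that piece,
   so one of the two choices yields a *-orbit with data [d]. *)

From Pilot Require Import Defs.
From Stdlib Require Import Reals Lra Lia Arith ZArith Wf_nat Classical ClassicalEpsilon.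

Open Scope R_scope.

Lemma half_bounds (q : nat) : (2 * (q / 2) <= q < 2 * (q / 2) + 2)%nat.
Proof. pose proof (Nat.div_mod q 2). pose proof (Nat.mod_upper_bound q 2). lia. Qed.

Lemma mod_sub (a n : nat) : (n <= a < 2 * n)%nat -> (a mod n = a - n)%nat.
Proof. intros. symmetry. apply (Nat.mod_unique a n 1); lia. Qed.

Lemma odd_cases p :
  (Nat.odd p = true /\ exists q, p = 2 * q + 1)%nat \/
  (Nat.odd p = false /\ exists q, p = 2 * q)%nat.
Proof.
  destruct (Nat.Even_or_Odd p) as [[q Hq]|[q Hq]].
  - right. split; [|eauto]. subst. rewrite Nat.odd_mul. reflexivity.
  - left. split; [|eauto]. apply Nat.odd_spec. exists q. lia.
Qed.

Lemma floorN_spec x : 0 <= x -> INR (floorN x) <= x < INR (floorN x) + 1.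
Proof.
  intros Hx. unfold floorN. destruct (base_Int_part x) as [H1 H2].
  assert (Hz : (0 <= Int_part x)%Z).
  { assert (IZR (Int_part x) > -1) by lra. apply lt_IZR in H. lia. }
  rewrite INR_IZR_INZ, Z2Nat.id by exact Hz. lra.
Qed.

Lemma floorN_unique x p : INR p <= x < INR p + 1 -> floorN x = p.
Proof.
  intros [H1 H2]. unfold floorN, Int_part.
  assert (Hu : (Z.of_nat p + 1)%Z = up x).
  { apply tech_up; rewrite plus_IZR, <- INR_IZR_INZ; simpl; lra. }
  rewrite <- Hu. replace (Z.of_nat p + 1 - 1)%Z with (Z.of_nat p) by lia.
  apply Nat2Z.id.
Qed.

Lemma floorN_le x y : 0 <= x -> x <= y -> (floorN x <= floorN y)%nat.
Proof.
  intros Hx Hxy. pose proof (floorN_spec x Hx). pose proof (floorN_spec y ltac:(lra)).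
  destruct (Nat.le_gt_cases (floorN x) (floorN y)); auto. exfalso.
  assert (H2 : INR (S (floorN y)) <= INR (floorN x)) by (apply le_INR; lia).
  rewrite S_INR in H2. lra.
Qed.

(** * The map [f_{m/n}] on [e_0] *)

(** On [e_0], [f_{m/n}] has slope [slope m = 2m+1]: the piece
    [[p/(2m+1), (p+1)/(2m+1)]], [p <= 2m], goes onto [e_(piece_edge p)],
    backwards when [p] is odd, and the position of the image is [piece_map m p t]. *)
Definition slope (m : nat) : R := INR (2 * m + 1).
Definition piece_edge (p : nat) : nat := ((p + 1) / 2)%nat.
Definition piece_map (m p : nat) (t : R) : R :=
  if Nat.odd p then INR p + 1 - slope m * t else slope m * t - INR p.

Lemma slope_pos m : 0 < slope m.
Proof. unfold slope. apply lt_0_INR. lia. Qed.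

Lemma slope_ge3 m : (0 < m)%nat -> 3 <= slope m.
Proof. intros. unfold slope. replace 3 with (INR 3) by (simpl; lra). apply le_INR. lia. Qed.

Lemma piece_map_diff m p t t' :
  piece_map m p t' - piece_map m p t =
  (if Nat.odd p then - (slope m * (t' - t)) else slope m * (t' - t)).
Proof. unfold piece_map. destruct (Nat.odd p); lra. Qed.

Lemma piece_map_range m p t :
  INR p < slope m * t < INR p + 1 -> 0 < piece_map m p t < 1.
Proof. intros. unfold piece_map. destruct (Nat.odd p); lra. Qed.

Lemma piece_map_lt_iff m p t t' : t < t' ->
  (piece_map m p t < piece_map m p t' <-> Nat.odd p = false).
Proof.
  intros Ht. pose proof (slope_pos m). pose proof (piece_map_diff m p t t').
  destruct (Nat.odd p); split; intros; try discriminate; auto; nra.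
Qed.

Lemma piece_map_gt_iff m p t t' : t < t' ->
  (piece_map m p t > piece_map m p t' <-> Nat.odd p = true).
Proof.
  intros Ht. pose proof (slope_pos m). pose proof (piece_map_diff m p t t').
  destruct (Nat.odd p); split; intros; try discriminate; auto; nra.
Qed.

Lemma piece_map_inj m p t t' : piece_map m p t = piece_map m p t' -> t = t'.
Proof.
  intros E. pose proof (slope_pos m). pose proof (piece_map_diff m p t t') as D.
  rewrite E, Rminus_diag in D. destruct (Nat.odd p); nra.
Qed.

Lemma piece_edge_parity p :
  (Nat.odd p = true -> p = (2 * piece_edge p - 1)%nat /\ (1 <= piece_edge p)%nat) /\
  (Nat.odd p = false -> p = (2 * piece_edge p)%nat).
Proof.
  unfold piece_edge. destruct (odd_cases p) as [[Ho [q Hq]]|[Ho [q Hq]]]; rewrite Ho; subst p.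
  - split; [|discriminate]. intros _. pose proof (half_bounds (2 * q + 1 + 1)). lia.
  - split; [discriminate|]. intros _. pose proof (half_bounds (2 * q + 1)). lia.
Qed.

Lemma piece_lt1 m p t : (p <= 2 * m)%nat -> slope m * t < INR p + 1 -> t < 1.
Proof.
  intros Hp H. assert (INR p + 1 <= slope m).
  { unfold slope. rewrite <- S_INR. apply le_INR. lia. }
  pose proof (slope_pos m). apply (Rmult_lt_reg_l (slope m)); lra.
Qed.

Lemma piece_nbhd m p t0 : INR p < slope m * t0 < INR p + 1 ->
  exists e, 0 < e /\ forall t, Rabs (t - t0) < e -> INR p < slope m * t < INR p + 1.
Proof.
  intros H. pose proof (slope_pos m).
  set (mn := Rmin (slope m * t0 - INR p) (INR p + 1 - slope m * t0)).
  assert (Hmn : 0 < mn) by (apply Rmin_glb_lt; lra).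
  exists (mn / slope m). split; [apply Rdiv_lt_0_compat; auto|].
  intros t Ht. apply Rabs_def2 in Ht.
  assert (mn <= slope m * t0 - INR p) by apply Rmin_l.
  assert (mn <= INR p + 1 - slope m * t0) by apply Rmin_r.
  assert (E : slope m * (mn / slope m) = mn) by (field; lra).
  split; nra.
Qed.

Lemma fmap_e0_piece n m p t : (p <= 2 * m)%nat -> INR p < slope m * t < INR p + 1 ->
  fmap n m (Ed 0 t) = Ed (piece_edge p) (piece_map m p t).
Proof.
  intros Hp Ht. unfold fmap. fold (slope m).
  rewrite (floorN_unique _ p) by lra. unfold piece_map, piece_edge.
  destruct (odd_cases p) as [[Ho [q Hq]]|[Ho [q Hq]]]; rewrite Ho.
  - assert (Hne : Nat.eqb p 0 = false) by (apply Nat.eqb_neq; lia). rewrite Hne.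
    unfold mkpt. destruct (Req_EM_T (1 - (slope m * t - INR p)) 1) as [E|E]; [lra|].
    f_equal. lra.
  - destruct (Nat.eqb p 0) eqn:E.
    + apply Nat.eqb_eq in E. assert (q = 0)%nat by lia. subst. reflexivity.
    + subst. f_equal. pose proof (half_bounds (2*q)). pose proof (half_bounds (2*q+1)). lia.
Qed.

Lemma fmap_e0_breakpoint n m p t : INR p = slope m * t -> (p <= 2 * m)%nat ->
  fmap n m (Ed 0 t) =
  (if Nat.eqb p 0 then Ed 0 0 else if Nat.odd p then Vc else Ed (p / 2) 0).
Proof.
  intros Ht Hp. unfold fmap. fold (slope m).
  rewrite (floorN_unique _ p) by lra.
  destruct (Nat.eqb p 0); [f_equal; lra|].
  destruct (Nat.odd p).
  - unfold mkpt. destruct (Req_EM_T (1 - (slope m * t - INR p)) 1) as [E|E]; [reflexivity|lra].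
  - f_equal; lra.
Qed.

Lemma fmap_edge n m r t : (0 < r)%nat -> t <> 1 -> fmap n m (Ed r t) = Ed ((r + m) mod n) t.
Proof.
  intros Hr Ht. destruct r; [lia|]. simpl. unfold mkpt.
  destruct (Req_EM_T t 1); [contradiction|reflexivity].
Qed.

Lemma floorN_piece_le m t : 0 <= t < 1 -> (floorN (slope m * t) <= 2 * m)%nat.
Proof.
  intros Ht. pose proof (slope_pos m) as HM.
  pose proof (floorN_spec (slope m * t) ltac:(nra)) as [H1 H2].
  assert (INR (floorN (slope m * t)) < INR (2 * m + 1)) by (unfold slope in *; nra).
  apply INR_lt in H. lia.
Qed.

Lemma fmap_valid n m x : (m < n)%nat -> valid n x -> valid n (fmap n m x).
Proof.
  intros Hmn Hx. destruct x as [|r t]; [simpl; auto|]. destruct Hx as [Hr Ht].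
  destruct r as [|r'].
  - set (p := floorN (slope m * t)).
    assert (Hp : (p <= 2 * m)%nat) by (apply floorN_piece_le; auto).
    pose proof (slope_pos m).
    pose proof (floorN_spec (slope m * t) ltac:(nra)) as [F1 F2]. fold p in F1, F2.
    destruct (Rle_lt_or_eq_dec _ _ F1) as [Hlt|Heq].
    + rewrite (fmap_e0_piece n m p t Hp (conj Hlt F2)). split.
      * unfold piece_edge. pose proof (half_bounds (p + 1)). lia.
      * pose proof (piece_map_range m p t (conj Hlt F2)). lra.
    + rewrite (fmap_e0_breakpoint n m p t Heq Hp).
      destruct (Nat.eqb p 0); [simpl; split; [lia|lra]|].
      destruct (Nat.odd p); [simpl; auto|]. split; [|lra]. pose proof (half_bounds p). lia.
  - simpl. unfold mkpt. destruct (Req_EM_T t 1); simpl; auto.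
    split; auto. apply Nat.mod_upper_bound. lia.
Qed.

(** * Local behaviour of the truncation *)

(** [loc_pres] and [loc_rev] are the instances [rel = Rlt] and [rel = Rgt]. *)
Definition loc_monotone (n m : nat) (P : pt -> Prop) (rel : R -> R -> Prop) (p : pt) : Prop :=
  exists t0, p = Ed 0 t0 /\ exists delta, 0 < delta /\ exists j,
    forall t t' y y', span n P (Ed 0 t) -> span n P (Ed 0 t') ->
      Rabs (t - t0) < delta -> Rabs (t' - t0) < delta -> t < t' ->
      fP n m P (Ed 0 t) y -> fP n m P (Ed 0 t') y' ->
      exists a b, y = Ed j a /\ y' = Ed j b /\ rel a b.

Record labelling (n : nat) (N : nat -> nat) (X : nat -> nat -> R) (P : pt -> Prop) : Prop := {
  lab_n : (2 <= n)%nat;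
  lab_N : forall r, (r < n)%nat -> (0 < N r)%nat;
  lab_range : forall r s, (r < n)%nat -> (s < N r)%nat -> 0 <= X r s < 1;
  lab_inc : forall r s s', (r < n)%nat -> (s < s')%nat -> (s' < N r)%nat -> X r s < X r s';
  lab_P : forall y, P y <-> exists r s, (r < n)%nat /\ (s < N r)%nat /\ y = Ed r (X r s) }.
Arguments lab_n {n N X P}. Arguments lab_N {n N X P}. Arguments lab_range {n N X P}.
Arguments lab_inc {n N X P}. Arguments lab_P {n N X P}.

Section Configuration.
Variables (n m : nat) (N : nat -> nat) (X : nat -> nat -> R) (P : pt -> Prop).
Hypothesis Hlab : labelling n N X P.
Let Hn := lab_n Hlab.
Let HN := lab_N Hlab.
Let HX01 := lab_range Hlab.
Let HXinc := lab_inc Hlab.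
Let HP := lab_P Hlab.

Lemma X_first_le r s : (r < n)%nat -> (s < N r)%nat -> X r 0 <= X r s.
Proof. intros. destruct s; [lra|]. left. apply HXinc; lia. Qed.

Lemma X_lt_index r a b : (r < n)%nat -> (a < N r)%nat -> (b < N r)%nat ->
  X r a < X r b -> (a < b)%nat.
Proof.
  intros Hr Ha Hb H. destruct (Nat.lt_ge_cases a b) as [|Hba]; auto. exfalso.
  destruct (Nat.eq_dec a b); [subst; lra|].
  assert (X r b < X r a) by (apply HXinc; auto; lia). lra.
Qed.

Lemma P_label r s : (r < n)%nat -> (s < N r)%nat -> P (Ed r (X r s)).
Proof. intros. apply HP. exists r, s. auto. Qed.

Lemma span_iff y :
  span n P y <-> y = Vc \/ exists r c, y = Ed r c /\ (r < n)%nat /\ X r 0 <= c < 1.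
Proof.
  assert (Hother : forall r, (r < n)%nat ->
    exists r', (r' < n)%nat /\ r' <> r /\ P (Ed r' (X r' 0))).
  { intros r Hr. exists (if Nat.eqb r 0 then 1%nat else 0%nat).
    destruct (Nat.eqb r 0) eqn:E; [apply Nat.eqb_eq in E|apply Nat.eqb_neq in E];
      (split; [lia|split; [lia|apply P_label; [lia|apply HN; lia]]]). }
  assert (Hdiff : forall r r' a b, r' <> r -> ~ same_edge (Ed r a) (Ed r' b)).
  { intros r r' a b Hne [r1 [a1 [b1 [E1 E2]]]]. inversion E1. inversion E2. congruence. }
  split.
  - intros [Hv [HPy | [p [q [Hp [Hq Hb]]]]]].
    + apply HP in HPy. destruct HPy as [r [s [Hr [Hs ->]]]]. right. exists r, (X r s).
      repeat split; auto; [apply X_first_le | apply HX01]; auto.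
    + apply HP in Hp. destruct Hp as [r [s [Hr [Hs ->]]]].
      apply HP in Hq. destruct Hq as [r' [s' [Hr' [Hs' ->]]]].
      destruct Hb as [[r1 [a [b [c [E1 [E2 [E3 Hc]]]]]]] | [_ [Hs1|Hs1]]].
      * inversion E1; inversion E2; subst. right. exists r1, c. repeat split; auto.
        -- pose proof (X_first_le r1 s Hr Hs). pose proof (X_first_le r1 s' Hr' Hs').
           assert (X r1 0 <= Rmin (X r1 s) (X r1 s')) by (apply Rmin_glb; auto). lra.
        -- simpl in Hv. lra.
      * destruct Hs1 as [->|[r1 [a [c [E1 [E2 Hc]]]]]]; [now left|].
        inversion E1; subst. right. exists r1, c. repeat split; auto.
        -- pose proof (X_first_le r1 s Hr Hs). lra.
        -- simpl in Hv; lra.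
      * destruct Hs1 as [->|[r1 [a [c [E1 [E2 Hc]]]]]]; [now left|].
        inversion E1; subst. right. exists r1, c. repeat split; auto.
        -- pose proof (X_first_le r1 s' Hr' Hs'). lra.
        -- simpl in Hv; lra.
  - intros [-> | [r [c [-> [Hr Hc]]]]].
    + destruct (Hother 0%nat ltac:(lia)) as [r' [Hr' [Hne HP']]].
      split; [exact I|]. right. exists (Ed 0 (X 0 0)), (Ed r' (X r' 0)).
      split; [apply P_label; [lia|apply HN; lia]|]. split; auto.
      right. split; [apply Hdiff; auto|]. left. left. reflexivity.
    + destruct (Hother r Hr) as [r' [Hr' [Hne HP']]].
      pose proof (HX01 r 0 Hr (HN r Hr)).
      split; [split; [auto|lra]|]. right. exists (Ed r (X r 0)), (Ed r' (X r' 0)).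
      split; [apply P_label; auto|]. split; auto.
      right. split; [apply Hdiff; auto|]. left. right. exists r, (X r 0), c. repeat split; lra.
Qed.

Lemma span_Ed r c : (r < n)%nat -> X r 0 <= c < 1 -> span n P (Ed r c).
Proof. intros. apply span_iff. right. exists r, c. auto. Qed.

Lemma span_Ed_inv r c : span n P (Ed r c) -> (r < n)%nat /\ X r 0 <= c < 1.
Proof.
  intros H. apply span_iff in H. destruct H as [H|[r1 [c1 [E H]]]]; [discriminate|].
  inversion E; subst; auto.
Qed.

Lemma fP_iff x j u y : span n P x -> fmap n m x = Ed j u -> (j < n)%nat -> 0 <= u < 1 ->
  (fP n m P x y <-> y = Ed j (Rmax u (X j 0))).
Proof.
  intros Hx Hf Hj Hu. pose proof (HX01 j 0 Hj (HN j Hj)) as Hj0.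
  unfold fP. rewrite Hf. split.
  - intros [_ [[Hs ->] | [Hns [r [t [E [Hy Hend]]]]]]].
    + apply span_Ed_inv in Hs. rewrite Rmax_left by lra. reflexivity.
    + inversion E; subst. destruct Hend as [[-> H]|[t' [-> Ht']]].
      * exfalso. apply (H (X r 0)). apply span_Ed; auto. lra.
      * assert (t' <= X r 0) by (apply Ht'; apply span_Ed; auto; lra).
        assert (t < X r 0).
        { destruct (Rlt_dec t (X r 0)); auto. exfalso; apply Hns; apply span_Ed; auto; lra. }
        apply span_Ed_inv in Hy. rewrite Rmax_right by lra. f_equal. lra.
  - intros ->. split; auto. destruct (Rle_dec (X j 0) u).
    + left. rewrite Rmax_left by lra. split; auto. apply span_Ed; auto; lra.
    + right. split; [intros Hs; apply span_Ed_inv in Hs; lra|].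
      exists j, u. split; auto. rewrite Rmax_right by lra.
      split; [apply span_Ed; auto; lra|].
      right. exists (X j 0). split; auto. intros c Hc. apply span_Ed_inv in Hc. lra.
Qed.

Lemma is_first_iff r q : (r < n)%nat -> (is_first P r q <-> q = Ed r (X r 0)).
Proof.
  intros Hr. split.
  - intros [HPq [Hon Hmin]]. apply HP in HPq. destruct HPq as [r' [s' [Hr' [Hs' ->]]]].
    destruct Hon as [E|[t E]]; [discriminate|]. inversion E. subst r'.
    destruct s' as [|s']; auto. exfalso.
    assert (Hle : X r (S s') <= X r 0).
    { apply (Hmin _ (P_label r 0 Hr (HN r Hr))). right. eexists. reflexivity. }
    assert (X r 0 < X r (S s')) by (apply HXinc; auto; lia). lra.
  - intros ->. split; [apply P_label; auto|]. split; [right; eexists; reflexivity|].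
    intros q Hq Hon. apply HP in Hq. destruct Hq as [r' [s' [Hr' [Hs' ->]]]].
    destruct Hon as [E|[t E]]; [discriminate|]. inversion E. subst r'. apply X_first_le; auto.
Qed.

Section Behaviour.
Variables (s p : nat).
Hypothesis Hs : (s < N 0)%nat.
Hypothesis Hp : (p <= 2 * m)%nat.
Hypothesis Hpc : INR p < slope m * X 0 s < INR p + 1.
Hypothesis Hjn : (piece_edge p < n)%nat.

Let t0 := X 0 s.
Let j := piece_edge p.

Lemma X0_le_t0 : X 0 0 <= t0.
Proof. apply X_first_le; auto; lia. Qed.

Lemma fP_in_piece t y : INR p < slope m * t < INR p + 1 -> span n P (Ed 0 t) ->
  (fP n m P (Ed 0 t) y <-> y = Ed j (Rmax (piece_map m p t) (X j 0))).
Proof.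
  intros Ht Hsp. apply fP_iff; auto; [apply fmap_e0_piece; auto|].
  pose proof (piece_map_range m p t Ht). lra.
Qed.

Lemma span_piece t : X 0 0 <= t -> INR p < slope m * t < INR p + 1 -> span n P (Ed 0 t).
Proof. intros H0t Ht. apply span_Ed; [lia|]. split; auto. eapply piece_lt1; eauto. apply Ht. Qed.

Lemma regular_nbhd : X j 0 < piece_map m p t0 ->
  exists e, 0 < e /\ forall t, Rabs (t - t0) < e ->
    INR p < slope m * t < INR p + 1 /\
    forall y, span n P (Ed 0 t) -> (fP n m P (Ed 0 t) y <-> y = Ed j (piece_map m p t)).
Proof.
  intros Hlt. pose proof (slope_pos m) as HM.
  destruct (piece_nbhd m p t0 Hpc) as [e1 [He1 Hin]].
  set (e2 := (piece_map m p t0 - X j 0) / slope m).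
  assert (He2 : 0 < e2) by (apply Rdiv_lt_0_compat; lra).
  exists (Rmin e1 e2). split; [apply Rmin_glb_lt; auto|].
  intros t Ht.
  assert (Ht1 : Rabs (t - t0) < e1) by (eapply Rlt_le_trans; [exact Ht|apply Rmin_l]).
  assert (Ht2 : Rabs (t - t0) < e2) by (eapply Rlt_le_trans; [exact Ht|apply Rmin_r]).
  assert (Hmt : slope m * e2 = piece_map m p t0 - X j 0) by (unfold e2; field; lra).
  assert (Hbig : X j 0 < piece_map m p t).
  { apply Rabs_def2 in Ht2. pose proof (piece_map_diff m p t0 t). destruct (Nat.odd p); nra. }
  split; [apply Hin; auto|]. intros y Hsp.
  rewrite (fP_in_piece t y (Hin t Ht1) Hsp), Rmax_left by lra. reflexivity.
Qed.

Lemma loc_monotone_regular (rel : R -> R -> Prop) (Q : Prop) :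
  X j 0 < piece_map m p t0 ->
  (forall t t', t < t' -> (rel (piece_map m p t) (piece_map m p t') <-> Q)) ->
  (loc_monotone n m P rel (Ed 0 t0) <-> Q).
Proof.
  intros Hlt HQ. destruct (regular_nbhd Hlt) as [e [He Hloc]].
  assert (Hsp0 : span n P (Ed 0 t0)) by (apply span_piece; auto; apply X0_le_t0).
  assert (H0 : Rabs (t0 - t0) < e) by (rewrite Rminus_diag, Rabs_R0; auto).
  split.
  - intros [t1 [E [d [Hd [j' H]]]]]. inversion E. subst t1.
    set (eps := Rmin d e / 2).
    assert (Heps : 0 < eps /\ eps < e /\ eps < d).
    { unfold eps. pose proof (Rmin_l d e). pose proof (Rmin_r d e).
      pose proof (Rmin_glb_lt d e 0 Hd He). lra. }
    assert (Hnear : forall d', eps < d' -> Rabs (t0 + eps - t0) < d').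
    { intros. replace (t0 + eps - t0) with eps by ring. rewrite Rabs_right; lra. }
    destruct (Hloc (t0 + eps) (Hnear e ltac:(lra))) as [Hin Hf].
    assert (Hsp : span n P (Ed 0 (t0 + eps))) by (apply span_piece; auto; pose proof X0_le_t0; lra).
    destruct (H _ _ _ _ Hsp0 Hsp (ltac:(rewrite Rminus_diag, Rabs_R0; auto)) (Hnear d ltac:(lra))
                ltac:(lra) (proj2 (proj2 (Hloc t0 H0) _ Hsp0) eq_refl)
                (proj2 (Hf _ Hsp) eq_refl)) as [a [b [E1 [E2 Hab]]]].
    inversion E1; inversion E2; subst. apply (HQ t0 (t0 + eps)); auto. lra.
  - intros HQt. exists t0. split; auto. exists e. split; auto. exists j.
    intros t t' y y' Hs1 Hs2 Ht Ht' Htt Hf Hf'.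
    apply (proj2 (Hloc t Ht)) in Hf; auto. apply (proj2 (Hloc t' Ht')) in Hf'; auto.
    subst. exists (piece_map m p t), (piece_map m p t'). repeat split. apply HQ; auto.
Qed.

Lemma not_noninj_regular : X j 0 < piece_map m p t0 -> ~ loc_noninj n m P (Ed 0 t0).
Proof.
  intros Hlt [t1 [E H]]. inversion E. subst t1.
  destruct (regular_nbhd Hlt) as [e [He Hloc]].
  destruct (H e He) as [t [t' [y [Hs1 [Hs2 [Ht [Ht' [Hne [Hf Hf']]]]]]]]].
  apply (proj2 (Hloc t Ht)) in Hf; auto. apply (proj2 (Hloc t' Ht')) in Hf'; auto.
  subst. inversion Hf'. apply Hne. eapply piece_map_inj; eauto.
Qed.

Lemma behaves_regular g : X j 0 < piece_map m p t0 ->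
  (behaves n m P g (Ed 0 t0) <-> g = if Nat.odd p then cA else cB).
Proof.
  intros Hlt. destruct g; simpl.
  - change (loc_rev n m P (Ed 0 t0)) with (loc_monotone n m P Rgt (Ed 0 t0)).
    rewrite (loc_monotone_regular Rgt (Nat.odd p = true) Hlt (piece_map_gt_iff m p)).
    destruct (Nat.odd p); split; congruence.
  - change (loc_pres n m P (Ed 0 t0)) with (loc_monotone n m P Rlt (Ed 0 t0)).
    rewrite (loc_monotone_regular Rlt (Nat.odd p = false) Hlt (piece_map_lt_iff m p)).
    destruct (Nat.odd p); split; congruence.
  - split; [intros H; exfalso; exact (not_noninj_regular Hlt H)|].
    destruct (Nat.odd p); discriminate.
Qed.

(** On the side of [t0] where [f] moves towards the initial point of [e_j], the
    truncation is constant; that side lies in the span because it is the side of [v]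
    (odd piece) or [t0] is not the first point of [e_0]. *)
Lemma fold_nbhd : piece_map m p t0 = X j 0 -> (Nat.odd p = true \/ (0 < s)%nat) ->
  exists e, 0 < e /\ forall x, 0 < x < e ->
    span n P (Ed 0 (t0 + (if Nat.odd p then x else - x))) /\
    fP n m P (Ed 0 (t0 + (if Nat.odd p then x else - x))) (Ed j (X j 0)).
Proof.
  intros Heq Hside. pose proof (slope_pos m) as HM. pose proof X0_le_t0 as H00.
  destruct (piece_nbhd m p t0 Hpc) as [e1 [He1 Hin]].
  set (gap := if Nat.odd p then 1 else t0 - X 0 0).
  assert (Hgap : 0 < gap).
  { unfold gap. destruct (Nat.odd p); [lra|]. destruct Hside as [|Hs0]; [discriminate|].
    assert (X 0 0 < t0) by (apply HXinc; auto; lia). lra. }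
  exists (Rmin e1 gap). split; [apply Rmin_glb_lt; auto|]. intros x Hx.
  assert (Hx1 : x < e1) by (pose proof (Rmin_l e1 gap); lra).
  assert (Hx2 : x < gap) by (pose proof (Rmin_r e1 gap); lra).
  set (t := t0 + (if Nat.odd p then x else - x)).
  assert (Hi : INR p < slope m * t < INR p + 1).
  { apply Hin. unfold t. destruct (Nat.odd p);
      [replace (t0 + x - t0) with x by ring|replace (t0 + - x - t0) with (- x) by ring;
       rewrite Rabs_Ropp]; rewrite Rabs_right; lra. }
  assert (Hsp : span n P (Ed 0 t)).
  { apply span_piece; auto. unfold t, gap, t0 in *. destruct (Nat.odd p); lra. }
  split; auto. apply (fP_in_piece t _ Hi Hsp). f_equal. rewrite Rmax_right; auto.
  pose proof (piece_map_diff m p t0 t) as D. rewrite Heq in D. unfold t, t0 in *.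
  destruct (Nat.odd p); nra.
Qed.

Lemma fold_pairs : piece_map m p t0 = X j 0 -> (Nat.odd p = true \/ (0 < s)%nat) ->
  forall d, 0 < d -> exists t t', t <> t' /\ Rabs (t - t0) < d /\ Rabs (t' - t0) < d /\
    span n P (Ed 0 t) /\ span n P (Ed 0 t') /\
    fP n m P (Ed 0 t) (Ed j (X j 0)) /\ fP n m P (Ed 0 t') (Ed j (X j 0)).
Proof.
  intros Heq Hside d Hd. destruct (fold_nbhd Heq Hside) as [e [He Hfold]].
  set (x := Rmin d e / 2).
  assert (Hx : 0 < x < e /\ x < d).
  { unfold x. pose proof (Rmin_l d e). pose proof (Rmin_r d e).
    pose proof (Rmin_glb_lt d e 0 Hd He). lra. }
  assert (Hnear : forall y, 0 < y <= x ->
    Rabs (t0 + (if Nat.odd p then y else - y) - t0) < d).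
  { intros y Hy. destruct (Nat.odd p);
      [replace (t0 + y - t0) with y by ring|replace (t0 + - y - t0) with (- y) by ring;
       rewrite Rabs_Ropp]; rewrite Rabs_right; lra. }
  destruct (Hfold x ltac:(lra)) as [A1 A2]. destruct (Hfold (x / 2) ltac:(lra)) as [B1 B2].
  exists (t0 + (if Nat.odd p then x else - x)), (t0 + (if Nat.odd p then x / 2 else - (x / 2))).
  split; [destruct (Nat.odd p); lra|].
  split; [apply Hnear; lra|]. split; [apply Hnear; lra|]. auto.
Qed.

Lemma not_loc_monotone_fold (rel : R -> R -> Prop) :
  piece_map m p t0 = X j 0 -> (Nat.odd p = true \/ (0 < s)%nat) ->
  (forall a, ~ rel a a) -> ~ loc_monotone n m P rel (Ed 0 t0).
Proof.
  intros Heq Hside Hirr [t1 [E [d [Hd [j' H]]]]]. inversion E. subst t1.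
  destruct (fold_pairs Heq Hside d Hd) as [t [t' [Hne [Ht [Ht' [S1 [S2 [F1 F2]]]]]]]].
  destruct (Rtotal_order t t') as [Hlt|[Heqt|Hlt]]; [|contradiction|].
  - destruct (H _ _ _ _ S1 S2 Ht Ht' Hlt F1 F2) as [a [b [E1 [E2 Hab]]]].
    rewrite E1 in E2. inversion E2. subst. apply (Hirr b Hab).
  - destruct (H _ _ _ _ S2 S1 Ht' Ht Hlt F2 F1) as [a [b [E1 [E2 Hab]]]].
    rewrite E1 in E2. inversion E2. subst. apply (Hirr b Hab).
Qed.

Lemma behaves_fold g : piece_map m p t0 = X j 0 -> (Nat.odd p = true \/ (0 < s)%nat) ->
  (behaves n m P g (Ed 0 t0) <-> g = cC).
Proof.
  intros Heq Hside. destruct g; simpl.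
  - split; [|discriminate]. intros H. exfalso.
    exact (not_loc_monotone_fold Rgt Heq Hside (Rlt_irrefl) H).
  - split; [|discriminate]. intros H. exfalso.
    exact (not_loc_monotone_fold Rlt Heq Hside (Rlt_irrefl) H).
  - split; auto. intros _. exists t0. split; auto. intros d Hd.
    destruct (fold_pairs Heq Hside d Hd) as [t [t' [Hne [Ht [Ht' [S1 [S2 [F1 F2]]]]]]]].
    exists t, t', (Ed j (X j 0)). auto 10.
Qed.

End Behaviour.

End Configuration.

(** * The cycle of [pi] *)

Section Cycle.
Variables (n : nat) (d : data).
Hypothesis Hd : in_Dn n d.
Hypothesis Hn : (1 <= n)%nat.
Local Notation pi := (dpi d).
Local Notation L := (inL n d).

Lemma dN_pos r : (r < n)%nat -> (0 < dN d r)%nat.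
Proof. apply Hd. Qed.

Lemma inL_dpi z : L z -> L (pi z).
Proof. apply Hd. Qed.

Lemma dpi_inj z z' : L z -> L z' -> pi z = pi z' -> z = z'.
Proof. apply Hd. Qed.

Lemma dpi_reach z z' : L z -> L z' -> exists i, Nat.iter i pi z = z'.
Proof. apply Hd. Qed.

Lemma inL_first r : (r < n)%nat -> L (r, 0%nat).
Proof. intros. split; [auto|apply dN_pos; auto]. Qed.

Lemma inL_iter i z : L z -> L (Nat.iter i pi z).
Proof. intros Hz. induction i; simpl; auto. apply inL_dpi; auto. Qed.

Lemma iter_dpi_inj i z z' : L z -> L z' -> Nat.iter i pi z = Nat.iter i pi z' -> z = z'.
Proof.
  intros Hz Hz'. induction i; simpl; auto. intros E. apply IHi.
  apply dpi_inj; auto; apply inL_iter; auto.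
Qed.

Lemma cycle_invariant (Q : nat * nat -> Prop) : (forall z, L z -> Q z -> Q (pi z)) ->
  forall z z', L z -> L z' -> Q z -> Q z'.
Proof.
  intros H z z' Hz Hz' Qz. destruct (dpi_reach z z' Hz Hz') as [i <-].
  clear Hz'. induction i; simpl; auto. apply H; auto. apply inL_iter; auto.
Qed.

Lemma dpi_period : exists T, (0 < T)%nat /\ Nat.iter T pi (0%nat, 0%nat) = (0%nat, 0%nat) /\
  (forall i i', (i < T)%nat -> (i' < T)%nat ->
     Nat.iter i pi (0%nat, 0%nat) = Nat.iter i' pi (0%nat, 0%nat) -> i = i') /\
  (forall z, L z -> exists i, (i < T)%nat /\ z = Nat.iter i pi (0%nat, 0%nat)).
Proof.
  set (z0 := (0%nat, 0%nat)). assert (Hz0 : L z0) by (apply inL_first; lia).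
  set (Ret := fun k => (0 < k)%nat /\ Nat.iter k pi z0 = z0).
  assert (Hex : exists k, Ret k).
  { destruct (dpi_reach (pi z0) z0 (inL_dpi _ Hz0) Hz0) as [j Hj].
    exists (S j). split; [lia|]. rewrite Nat.iter_succ_r. auto. }
  destruct (dec_inh_nat_subset_has_unique_least_element Ret (fun k => classic (Ret k)) Hex)
    as [T [[[HT0 HT] Hmin] _]].
  assert (Hmul : forall q, Nat.iter (q * T) pi z0 = z0).
  { induction q; simpl; auto. rewrite Nat.iter_add, IHq. auto. }
  exists T. split; [auto|]. split; [auto|]. split.
  - assert (Hgen : forall a b, (a < b < T)%nat -> Nat.iter a pi z0 <> Nat.iter b pi z0).
    { intros a b Hab Eab. replace b with ((b - a) + a)%nat in Eab by lia.
      rewrite Nat.iter_add in Eab.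
      assert (Hc : z0 = Nat.iter (b - a) pi z0).
      { apply (iter_dpi_inj a); auto; [apply inL_iter; auto|].
        rewrite <- Nat.iter_add, Nat.add_comm, Nat.iter_add. exact Eab. }
      assert (T <= b - a)%nat by (apply Hmin; split; [lia|auto]). lia. }
    intros i i' Hi Hi' E.
    destruct (Nat.lt_trichotomy i i') as [H|[H|H]]; auto; exfalso;
      [apply (Hgen i i')|apply (Hgen i' i)]; auto.
  - intros z Hz. destruct (dpi_reach z0 z Hz0 Hz) as [a Ha].
    exists (a mod T)%nat. split; [apply Nat.mod_upper_bound; lia|].
    rewrite (Nat.div_mod a T), Nat.add_comm, Nat.iter_add, Nat.mul_comm, Hmul in Ha by lia.
    auto.
Qed.

Lemma dpi_periodic : exists T, (0 < T)%nat /\ (forall z, L z -> Nat.iter T pi z = z) /\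
  (forall z, L z -> exists k, (k < T)%nat /\ Nat.iter k pi z = (0%nat, 0%nat)).
Proof.
  destruct dpi_period as [T [HT [HTz [_ Hall]]]].
  exists T. split; auto. split.
  - intros z Hz. destruct (Hall z Hz) as [i [Hi ->]].
    rewrite <- Nat.iter_add, Nat.add_comm, Nat.iter_add, HTz. reflexivity.
  - intros z Hz. destruct (Hall z Hz) as [[|i] [Hi ->]]; [exists 0%nat; auto|].
    exists (T - S i)%nat. split; [lia|].
    rewrite <- Nat.iter_add. replace (T - S i + S i)%nat with T by lia. auto.
Qed.

End Cycle.

Lemma iter_growth (U : Type) (phi : U -> U) (Q : U -> R) (good E0 : U -> Prop) (c : R) :
  (forall u, good u -> 0 < Q u ->
     good (phi u) /\ Q u <= Q (phi u) /\ (E0 u -> c * Q u <= Q (phi u))) ->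
  forall u, good u -> 0 < Q u -> 1 <= c -> forall i,
    good (Nat.iter i phi u) /\ Q u <= Q (Nat.iter i phi u) /\
    ((exists k, (k < i)%nat /\ E0 (Nat.iter k phi u)) -> c * Q u <= Q (Nat.iter i phi u)).
Proof.
  intros H u Hu HQ Hc i. induction i as [|i [IH1 [IH2 IH3]]].
  - simpl. split; auto. split; [lra|]. intros [k [Hk _]]. lia.
  - rewrite Nat.iter_succ. destruct (H _ IH1 ltac:(lra)) as [H1 [H2 H3]].
    split; auto. split; [lra|].
    intros [k' [Hk' HE]]. destruct (Nat.eq_dec k' i) as [->|Hne].
    + specialize (H3 HE). nra.
    + assert (c * Q u <= Q (Nat.iter i phi u)) by (apply IH3; exists k'; split; auto; lia). lra.
Qed.

(** * Realizing data satisfying (a) and (b) *)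

(** The piece of [e_0] that the point labelled [(0,s)] must occupy; only for the
    label [c] of [C] is there a choice, [b = 2m-1] or [b = 2m]. *)
Definition piece (d : data) (b s : nat) : nat :=
  let j := fst (dpi d (0%nat, s)) in
  if Nat.eqb j 0 then 0%nat else
  match dlab d s with cA => (2 * j - 1)%nat | cB => (2 * j)%nat | cC => b end.

Definition dist01 (y : R) : R := Rmax 0 (Rmax (- y) (y - 1)).

Lemma dist01_cases y : (0 <= y <= 1 /\ dist01 y = 0) \/ (y < 0 /\ dist01 y = - y) \/
  (1 < y /\ dist01 y = y - 1).
Proof.
  unfold dist01. destruct (Rle_dec 0 y); destruct (Rle_dec y 1).
  - left. split; [lra|]. rewrite Rmax_left; auto. apply Rmax_lub; lra.
  - right; right. split; [lra|]. rewrite (Rmax_right (- y)), Rmax_right; lra.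
  - right; left. split; [lra|]. rewrite (Rmax_left (- y)), Rmax_right; lra.
  - lra.
Qed.

Lemma dist01_ge0 y : 0 <= dist01 y.
Proof. apply Rmax_l. Qed.

Lemma dist01_piece_map m p y : (0 < m)%nat -> (p <= 2 * m)%nat ->
  slope m * dist01 y <= dist01 (piece_map m p y).
Proof.
  intros Hm Hp. pose proof (slope_ge3 m Hm).
  assert (HpM : INR p + 1 <= slope m) by (unfold slope; rewrite <- S_INR; apply le_INR; lia).
  pose proof (pos_INR p). unfold piece_map.
  destruct (dist01_cases y) as [[H1 H2]|[[H1 H2]|[H1 H2]]]; rewrite H2.
  - rewrite Rmult_0_r. apply dist01_ge0.
  - destruct (Nat.odd p);
      match goal with |- _ <= dist01 ?e =>
        destruct (dist01_cases e) as [[A1 A2]|[[A1 A2]|[A1 A2]]]; rewrite A2 end; nra.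
  - destruct (Nat.odd p);
      match goal with |- _ <= dist01 ?e =>
        destruct (dist01_cases e) as [[A1 A2]|[[A1 A2]|[A1 A2]]]; rewrite A2 end; nra.
Qed.

Definition cycle_shift (d : data) (b c dd : nat) : Prop :=
  let z j := Nat.iter j (dpi d) (0%nat, c) in
  z dd <> (0%nat, c) /\
  forall j, fst (z j) = fst (z (j + dd)%nat) /\
    (fst (z j) = 0%nat -> piece d b (snd (z j)) = piece d b (snd (z (j + dd)%nat))).

Section Realization.
Variables (n m k : nat) (g : cls) (d : data) (c : nat).
Local Notation N := (dN d).
Local Notation pi := (dpi d).
Local Notation L := (inL n d).
Local Notation pi1 z := (fst (dpi d z)).
Local Notation pi2 z := (snd (dpi d z)).
Hypothesis Hm : (0 < m)%nat.
Hypothesis Hmn : (2 * m <= n)%nat.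
Hypothesis Hk : (k < m)%nat.
Hypothesis Hg : g = cA \/ g = cB.
Hypothesis Hk0 : k = 0%nat -> g = cB.
Hypothesis HD : in_Dn n d.
Hypothesis Hab : cond_ab n m k g d.
Hypothesis Hc : (c < N 0%nat)%nat /\ dlab d c = cC /\
  forall c', (c' < N 0%nat)%nat -> dlab d c' = cC -> c' = c.

Let Ha : forall r, (0 < r < n)%nat ->
  (forall s, (s < N r)%nat -> pi1 (r, s) = ((r + m) mod n)%nat) /\
  (forall s1 s2, (s1 < s2)%nat -> (s2 < N r)%nat -> (pi2 (r, s1) < pi2 (r, s2))%nat) /\
  pi2 (r, 0%nat) = 0%nat := proj1 Hab.
Let Hb1 : dlab d 0%nat = g := proj1 (proj2 Hab).
Let Hb2 : pi1 (0%nat, 0%nat) = k := proj1 (proj2 (proj2 Hab)).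
Let Hb3 : forall c, (c < N 0%nat)%nat -> dlab d c = cC -> pi (0%nat, c) = (m, 0%nat) :=
  proj1 (proj2 (proj2 (proj2 Hab))).
Let Hb4a : forall s, (s < N 0%nat)%nat -> (k <= pi1 (0%nat, s) <= m)%nat :=
  proj1 (proj2 (proj2 (proj2 (proj2 Hab)))).
Let Hb4b : forall s1 s2, (s1 < s2)%nat -> (s2 < N 0%nat)%nat ->
  (pi1 (0%nat, s1) <= pi1 (0%nat, s2))%nat := proj1 (proj2 (proj2 (proj2 (proj2 (proj2 Hab))))).
Let Hb5 : forall s1 s2, (s1 < s2)%nat -> (s2 < N 0%nat)%nat ->
  pi1 (0%nat, s1) = pi1 (0%nat, s2) -> (dlab d s1 = cB \/ dlab d s1 = cC) -> dlab d s2 = cB :=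
  proj1 (proj2 (proj2 (proj2 (proj2 (proj2 (proj2 Hab)))))).
Let Hb6 : forall s1 s2, (s1 < s2)%nat -> (s2 < N 0%nat)%nat ->
  pi1 (0%nat, s1) = pi1 (0%nat, s2) ->
  (dlab d s1 = cA -> dlab d s2 = cA -> (pi2 (0%nat, s1) > pi2 (0%nat, s2))%nat) /\
  (dlab d s1 = cB -> dlab d s2 = cB -> (pi2 (0%nat, s1) < pi2 (0%nat, s2))%nat) :=
  proj2 (proj2 (proj2 (proj2 (proj2 (proj2 (proj2 Hab)))))).

Lemma inL0 s : (s < N 0)%nat -> L (0%nat, s).
Proof. intros. split; simpl; auto. lia. Qed.

Lemma C_unique s : (s < N 0)%nat -> dlab d s = cC -> s = c.
Proof. apply Hc. Qed.

Lemma dpi_fold : pi (0%nat, c) = (m, 0%nat).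
Proof. apply Hb3; apply Hc. Qed.

Lemma fold_label_pos : (0 < c)%nat.
Proof.
  destruct (Nat.eq_dec c 0) as [E|E]; [|lia]. exfalso. destruct Hc as [_ [H _]].
  rewrite E, Hb1 in H. destruct Hg; congruence.
Qed.

(** Condition (a) forces every first point [(r,0)], [r > 0], to be the image of a
    first point, so only the fold label [c] can be sent to a first point. *)
Lemma first_point_image_fold s : (s < N 0)%nat -> pi2 (0%nat, s) = 0%nat -> s = c.
Proof.
  intros Hs H2. destruct (pi (0%nat, s)) as [j s'] eqn:E. simpl in H2. subst s'.
  assert (Hj : (j <= m)%nat) by (pose proof (Hb4a s Hs); rewrite E in H; simpl in H; lia).
  destruct (Nat.eq_dec j m) as [->|Hjm].
  - assert (Heq : (0%nat, s) = (0%nat, c)).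
    { apply (dpi_inj n d HD); [apply inL0; auto|apply inL0, Hc|]. rewrite E, dpi_fold. auto. }
    inversion Heq; auto.
  - exfalso. set (r := (j + n - m)%nat).
    assert (Hr : (0 < r < n)%nat) by (unfold r; lia).
    destruct (Ha r Hr) as [Ha1 [_ Ha3]].
    assert (Hpr : pi (r, 0%nat) = (j, 0%nat)).
    { specialize (Ha1 0%nat (dN_pos n d HD r (proj2 Hr))).
      rewrite (surjective_pairing (pi (r, 0%nat))), Ha1, Ha3.
      f_equal. unfold r. rewrite mod_sub; lia. }
    assert (Heq : (r, 0%nat) = (0%nat, s)).
    { apply (dpi_inj n d HD); [apply (inL_first n d HD); lia|apply inL0; auto|].
      rewrite Hpr, E. auto. }
    inversion Heq. lia.
Qed.

Lemma image_index_pos s : (s < N 0)%nat -> s <> c -> (0 < pi2 (0%nat, s))%nat.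
Proof.
  intros Hs Hne. destruct (Nat.eq_dec (pi2 (0%nat, s)) 0) as [E|]; [|lia].
  exfalso. apply Hne. apply first_point_image_fold; auto.
Qed.

Lemma label_B_of_edge0 s : (s < N 0)%nat -> pi1 (0%nat, s) = 0%nat -> dlab d s = cB.
Proof.
  intros Hs Hj. assert (k = 0%nat) by (pose proof (Hb4a s Hs); lia).
  assert (H0 : dlab d 0%nat = cB) by (rewrite Hb1; auto).
  destruct s; auto. apply (Hb5 0%nat (S s)); auto; lia.
Qed.

Section Choice.
Variable b : nat.
Hypothesis Hbch : b = (2 * m - 1)%nat \/ b = (2 * m)%nat.
Local Notation piece := (piece d b).

Lemma piece_spec s : (s < N 0)%nat ->
  (piece s <= 2 * m)%nat /\ piece_edge (piece s) = pi1 (0%nat, s).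
Proof.
  intros Hs. pose proof (Hb4a s Hs). unfold piece; cbv zeta.
  destruct (Nat.eqb (pi1 (0%nat, s)) 0) eqn:E.
  - apply Nat.eqb_eq in E. rewrite E. split; [lia|reflexivity].
  - apply Nat.eqb_neq in E. unfold piece_edge.
    destruct (dlab d s) eqn:El.
    + split; [lia|]. pose proof (half_bounds (2 * pi1 (0%nat, s) - 1 + 1)). lia.
    + split; [lia|]. pose proof (half_bounds (2 * pi1 (0%nat, s) + 1)). lia.
    + assert (s = c) by (apply C_unique; auto). subst s. rewrite dpi_fold in *. cbn [fst] in *.
      destruct Hbch as [->| ->]; split; try lia.
      * pose proof (half_bounds (2 * m - 1 + 1)). lia.
      * pose proof (half_bounds (2 * m + 1)). lia.
Qed.

Lemma piece_parity s : (s < N 0)%nat -> s <> c ->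
  Nat.odd (piece s) = match dlab d s with cA => true | _ => false end.
Proof.
  intros Hs Hne. unfold piece; cbv zeta.
  destruct (Nat.eqb (pi1 (0%nat, s)) 0) eqn:E.
  - apply Nat.eqb_eq in E. rewrite label_B_of_edge0; auto.
  - apply Nat.eqb_neq in E. destruct (dlab d s) eqn:Ls.
    + apply Nat.odd_spec. exists (pi1 (0%nat, s) - 1)%nat. lia.
    + rewrite Nat.odd_mul. reflexivity.
    + exfalso. apply Hne. apply C_unique; auto.
Qed.

Lemma piece_mono s1 s2 : (s1 < s2)%nat -> (s2 < N 0)%nat -> (piece s1 <= piece s2)%nat.
Proof.
  intros H12 Hs2. assert (Hs1 : (s1 < N 0)%nat) by lia.
  pose proof (Hb4b s1 s2 H12 Hs2) as Hj. pose proof (Hb4a s2 Hs2).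
  assert (HC : forall s, (s < N 0)%nat -> dlab d s = cC -> pi1 (0%nat, s) = m).
  { intros s Hs Hl. rewrite (C_unique s Hs Hl), dpi_fold. reflexivity. }
  unfold piece; cbv zeta.
  destruct (Nat.eqb (pi1 (0%nat, s1)) 0) eqn:E1; [lia|]. apply Nat.eqb_neq in E1.
  destruct (Nat.eqb (pi1 (0%nat, s2)) 0) eqn:E2; [apply Nat.eqb_eq in E2; lia|].
  destruct (Nat.eq_dec (pi1 (0%nat, s1)) (pi1 (0%nat, s2))) as [Eq|Ne].
  - destruct (dlab d s1) eqn:L1.
    + destruct (dlab d s2) eqn:L2; try lia; specialize (HC s2 Hs2 L2); destruct Hbch; lia.
    + rewrite (Hb5 s1 s2 H12 Hs2 Eq (or_introl L1)). lia.
    + rewrite (Hb5 s1 s2 H12 Hs2 Eq (or_intror L1)). specialize (HC s1 Hs1 L1). destruct Hbch; lia.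
  - destruct (dlab d s1) eqn:L1; destruct (dlab d s2) eqn:L2; try lia;
      try specialize (HC s1 Hs1 L1); try specialize (HC s2 Hs2 L2); destruct Hbch; lia.
Qed.

Lemma same_piece_order s1 s2 : (s1 < s2)%nat -> (s2 < N 0)%nat -> piece s1 = piece s2 ->
  pi1 (0%nat, s1) = pi1 (0%nat, s2) /\
  (Nat.odd (piece s1) = true -> (pi2 (0%nat, s2) < pi2 (0%nat, s1))%nat) /\
  (Nat.odd (piece s1) = false -> (pi2 (0%nat, s1) < pi2 (0%nat, s2))%nat).
Proof.
  intros H12 Hs2 Ep. assert (Hs1 : (s1 < N 0)%nat) by lia.
  assert (Ej : pi1 (0%nat, s1) = pi1 (0%nat, s2)).
  { rewrite <- (proj2 (piece_spec s1 Hs1)), <- (proj2 (piece_spec s2 Hs2)), Ep. reflexivity. }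
  split; auto.
  destruct (Nat.eq_dec s1 c) as [->|Hne1].
  - rewrite dpi_fold; simpl. assert (Hne2 : s2 <> c) by lia.
    pose proof (image_index_pos s2 Hs2 Hne2). split; [|lia]. intros Ho.
    rewrite Ep, (piece_parity s2 Hs2 Hne2) in Ho.
    rewrite (Hb5 c s2 H12 Hs2 Ej (or_intror (proj1 (proj2 Hc)))) in Ho. discriminate.
  - rewrite (piece_parity s1 Hs1 Hne1).
    destruct (Nat.eq_dec s2 c) as [->|Hne2].
    + rewrite dpi_fold; simpl. pose proof (image_index_pos s1 Hs1 Hne1).
      assert (L1 : dlab d s1 = cA).
      { destruct (dlab d s1) eqn:L1; auto; exfalso.
        - pose proof (Hb5 s1 c H12 Hs2 Ej (or_introl L1)). destruct Hc as [_ [? _]]. congruence.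
        - apply Hne1, C_unique; auto. }
      rewrite L1. split; intros; [lia|discriminate].
    + pose proof (piece_parity s2 Hs2 Hne2) as P2. rewrite <- Ep, (piece_parity s1 Hs1 Hne1) in P2.
      destruct (Hb6 s1 s2 H12 Hs2 Ej) as [HA HB].
      destruct (dlab d s1) eqn:L1; destruct (dlab d s2) eqn:L2; try discriminate;
        split; intros; try discriminate;
        first [ apply HA; reflexivity | apply HB; reflexivity
              | solve [exfalso; apply Hne1, C_unique; auto]
              | solve [exfalso; apply Hne2, C_unique; auto] ].
Qed.

Definition step (z : nat * nat) (y : R) : R :=
  if Nat.eqb (fst z) 0 then piece_map m (piece (snd z)) y else y.

Lemma dist01_step z y : L z ->
  dist01 y <= dist01 (step z y) /\ (fst z = 0%nat -> slope m * dist01 y <= dist01 (step z y)).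
Proof.
  intros [Hz1 Hz2]. unfold step. destruct z as [r s]. simpl in *.
  destruct (Nat.eqb r 0) eqn:E; [|split; [lra|intros; apply Nat.eqb_neq in E; lia]].
  apply Nat.eqb_eq in E. subst r.
  pose proof (dist01_piece_map m (piece s) y Hm (proj1 (piece_spec s Hz2))).
  pose proof (slope_ge3 m Hm). pose proof (dist01_ge0 y). split; [nra|auto].
Qed.

Section Positions.
Variable pos : nat * nat -> R.
Hypothesis Hpos : forall z, L z -> pos (pi z) = step z (pos z).

(** Going once around the cycle multiplies the distance to [[0,1]] by at least the
    slope, yet returns to the same point. *)
Lemma pos_in01 z : L z -> 0 <= pos z <= 1.
Proof.
  intros Hz. pose proof (slope_ge3 m Hm) as HM.
  assert (Hd0 : dist01 (pos z) <= 0).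
  { destruct (Rle_dec (dist01 (pos z)) 0) as [|Hgt]; auto. exfalso.
    destruct (dpi_periodic n d HD ltac:(lia)) as [T [HT [HTz Hvis]]].
    assert (Hstep : forall u, L u -> 0 < dist01 (pos u) ->
      L (pi u) /\ dist01 (pos u) <= dist01 (pos (pi u)) /\
      (fst u = 0%nat -> slope m * dist01 (pos u) <= dist01 (pos (pi u)))).
    { intros u Hu _. rewrite Hpos by auto. split; [apply (inL_dpi n d HD); auto|].
      apply dist01_step; auto. }
    destruct (iter_growth _ pi (fun u => dist01 (pos u)) L (fun u => fst u = 0%nat) (slope m)
                Hstep z Hz ltac:(lra) ltac:(lra) T) as [_ [_ G]].
    destruct (Hvis z Hz) as [i [Hi Ei]]. rewrite HTz in G by auto.
    assert (slope m * dist01 (pos z) <= dist01 (pos z)) by (apply G; exists i; rewrite Ei; auto).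
    nra. }
  destruct (dist01_cases (pos z)) as [[H1 _]|[[H1 H2]|[H1 H2]]]; auto; lra.
Qed.

Lemma pos_piece_closed s : (s < N 0)%nat ->
  INR (piece s) <= slope m * pos (0%nat, s) <= INR (piece s) + 1.
Proof.
  intros Hs. pose proof (pos_in01 _ (inL_dpi n d HD _ (inL0 s Hs))) as H.
  rewrite Hpos in H by (apply inL0; auto). unfold step, piece_map in H. simpl in H.
  destruct (Nat.odd (piece s)); lra.
Qed.

(** Position [0] is invariant along the cycle, and would put the fold label at a
    breakpoint of piece [b >= 1]. *)
Lemma pos_neq0 z : L z -> pos z <> 0.
Proof.
  intros Hz E. pose proof (slope_ge3 m Hm) as HM.
  assert (H : pos (0%nat, c) = 0).
  { apply (cycle_invariant n d HD (fun z => pos z = 0)) with (z := z); auto.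
    - intros u Hu Pu. rewrite Hpos by auto. unfold step.
      destruct (Nat.eqb (fst u) 0) eqn:Eu; auto.
      apply Nat.eqb_eq in Eu. destruct u as [r s]. simpl in *. subst r.
      pose proof (pos_piece_closed s (proj2 Hu)) as Hcl. rewrite Pu in Hcl.
      assert (Hp0 : piece s = 0%nat).
      { destruct (piece s) as [|q]; auto. rewrite S_INR in Hcl. pose proof (pos_INR q). lra. }
      unfold piece_map. rewrite Hp0, Pu. simpl. lra.
    - apply inL0, Hc. }
  pose proof (pos_piece_closed c (proj1 Hc)) as Hcl. rewrite H in Hcl.
  unfold piece in Hcl; cbv zeta in Hcl. rewrite dpi_fold, (proj1 (proj2 Hc)) in Hcl. simpl in Hcl.
  destruct (Nat.eqb m 0) eqn:Em; [apply Nat.eqb_eq in Em; lia|].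
  assert (Hb1' : (1 <= b)%nat) by (destruct Hbch; lia).
  apply le_INR in Hb1'. simpl in Hb1'. lra.
Qed.

(** Symmetrically position [1] is invariant, and would put [(0,0)] at the right end
    of its piece, which is at most [2m-2] since [k < m]. *)
Lemma pos_neq1 z : L z -> pos z <> 1.
Proof.
  intros Hz E. pose proof (slope_ge3 m Hm) as HM.
  assert (H : pos (0%nat, 0%nat) = 1).
  { apply (cycle_invariant n d HD (fun z => pos z = 1)) with (z := z); auto.
    - intros u Hu Pu. rewrite Hpos by auto. unfold step.
      destruct (Nat.eqb (fst u) 0) eqn:Eu; auto.
      apply Nat.eqb_eq in Eu. destruct u as [r s]. simpl in *. subst r.
      pose proof (pos_piece_closed s (proj2 Hu)) as Hcl. rewrite Pu in Hcl.
      destruct (piece_spec s (proj2 Hu)) as [Hp _].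
      assert (Hp2 : (piece s = 2 * m)%nat).
      { assert (Hle : slope m <= INR (piece s) + 1) by lra.
        unfold slope in Hle. rewrite <- S_INR in Hle. apply INR_le in Hle. lia. }
      unfold piece_map. rewrite Hp2, Pu, Nat.odd_mul. unfold slope. rewrite plus_INR. simpl. lra.
    - apply inL0, (dN_pos n d HD). lia. }
  pose proof (pos_piece_closed 0 (dN_pos n d HD 0 ltac:(lia))) as Hcl. rewrite H in Hcl.
  assert (Hp0 : (piece 0 <= 2 * m - 2)%nat).
  { unfold piece; cbv zeta. rewrite Hb2.
    destruct (Nat.eqb k 0); [lia|]. rewrite Hb1. destruct Hg as [-> | ->]; lia. }
  apply le_INR in Hp0. rewrite minus_INR in Hp0 by lia. rewrite mult_INR in Hp0.
  unfold slope in Hcl. rewrite plus_INR, mult_INR in Hcl. simpl in *. lra.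
Qed.

Lemma pos_piece_open s : (s < N 0)%nat ->
  INR (piece s) < slope m * pos (0%nat, s) < INR (piece s) + 1.
Proof.
  intros Hs. pose proof (pos_piece_closed s Hs) as [H1 H2].
  pose proof (pos_neq0 _ (inL_dpi n d HD _ (inL0 s Hs))) as N0.
  pose proof (pos_neq1 _ (inL_dpi n d HD _ (inL0 s Hs))) as N1.
  rewrite Hpos in N0, N1 by (apply inL0; auto). unfold step, piece_map in N0, N1. simpl in N0, N1.
  assert (A1 : slope m * pos (0%nat, s) <> INR (piece s)).
  { intros E. destruct (Nat.odd (piece s)); [apply N1|apply N0]; rewrite E; ring. }
  assert (A2 : slope m * pos (0%nat, s) <> INR (piece s) + 1).
  { intros E. destruct (Nat.odd (piece s)); [apply N0|apply N1]; rewrite E; ring. }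
  split; [destruct (Rle_lt_or_eq_dec _ _ H1)|destruct (Rle_lt_or_eq_dec _ _ H2)]; auto;
    exfalso; auto.
Qed.

Lemma pos_lt1 z : L z -> pos z < 1.
Proof. intros Hz. pose proof (pos_in01 z Hz). pose proof (pos_neq1 z Hz). lra. Qed.

(** Monotonicity: a pair of labels on a common edge whose positions are in the wrong
    order stays so along the cycle (swapping the pair to keep its labels increasing),
    and its gap is expanded on [e_0]. *)
Definition sort_step (u : (nat * nat) * (nat * nat)) : (nat * nat) * (nat * nat) :=
  if Nat.ltb (pi2 (fst u)) (pi2 (snd u)) then (pi (fst u), pi (snd u))
  else (pi (snd u), pi (fst u)).

Definition ordered_pair (u : (nat * nat) * (nat * nat)) : Prop :=
  L (fst u) /\ L (snd u) /\ fst (fst u) = fst (snd u) /\ (snd (fst u) < snd (snd u))%nat.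

Definition inversion_gap (u : (nat * nat) * (nat * nat)) : R := pos (fst u) - pos (snd u).

Lemma sort_step_iter i z z' :
  Nat.iter i sort_step (z, z') = (Nat.iter i pi z, Nat.iter i pi z') \/
  Nat.iter i sort_step (z, z') = (Nat.iter i pi z', Nat.iter i pi z).
Proof.
  induction i; [left; reflexivity|].
  rewrite !Nat.iter_succ. destruct IHi as [E|E]; rewrite E; unfold sort_step; simpl;
    destruct (Nat.ltb _ _); auto.
Qed.

Lemma sort_step_gap u : ordered_pair u -> 0 < inversion_gap u ->
  ordered_pair (sort_step u) /\ inversion_gap u <= inversion_gap (sort_step u) /\
  (fst (fst u) = 0%nat -> slope m * inversion_gap u <= inversion_gap (sort_step u)).
Proof.
  destruct u as [[r s] [r' s']]. unfold ordered_pair, inversion_gap, sort_step. simpl.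
  intros [Hz [Hz' [Er Es]]] HQ. subst r'. pose proof (slope_ge3 m Hm).
  assert (HLz : L (pi (r, s))) by (apply (inL_dpi n d HD); auto).
  assert (HLz' : L (pi (r, s'))) by (apply (inL_dpi n d HD); auto).
  destruct (Nat.eq_dec r 0) as [->|Hr].
  - destruct (Nat.eq_dec (piece s) (piece s')) as [Ep|Np].
    + destruct (same_piece_order s s' Es (proj2 Hz') Ep) as [Ej [Hodd Hev]].
      pose proof (piece_map_diff m (piece s) (pos (0%nat, s')) (pos (0%nat, s))) as Hd.
      destruct (Nat.odd (piece s)) eqn:Ho.
      * specialize (Hodd eq_refl). rewrite (proj2 (Nat.ltb_ge _ _)) by lia. simpl.
        rewrite !Hpos by auto. unfold step. simpl. rewrite <- Ep.
        refine (conj (conj HLz' (conj HLz (conj (eq_sym Ej) Hodd))) (conj _ (fun _ => _))); nra.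
      * specialize (Hev eq_refl). rewrite (proj2 (Nat.ltb_lt _ _)) by lia. simpl.
        rewrite !Hpos by auto. unfold step. simpl. rewrite <- Ep.
        refine (conj (conj HLz (conj HLz' (conj Ej Hev))) (conj _ (fun _ => _))); nra.
    + exfalso. pose proof (piece_mono s s' Es (proj2 Hz')) as Hpm.
      pose proof (pos_piece_closed s (proj2 Hz)). pose proof (pos_piece_closed s' (proj2 Hz')).
      assert (Hle : (S (piece s) <= piece s')%nat) by lia.
      apply le_INR in Hle. rewrite S_INR in Hle. nra.
  - assert (Hr2 : (0 < r < n)%nat) by (destruct Hz; simpl in *; lia).
    destruct (Ha r Hr2) as [Ha1 [Ha2 _]].
    rewrite (proj2 (Nat.ltb_lt _ _)) by (apply Ha2; auto; apply Hz'). simpl.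
    rewrite !Hpos by auto. unfold step. simpl.
    rewrite (proj2 (Nat.eqb_neq r 0) Hr).
    split; [split; [auto|split; [auto|split]]|split; [lra|intros; lia]].
    + rewrite (Ha1 s (proj2 Hz)), (Ha1 s' (proj2 Hz')). reflexivity.
    + apply Ha2; auto. apply Hz'.
Qed.

Lemma pos_mono r s s' : (r < n)%nat -> (s < s')%nat -> (s' < N r)%nat ->
  pos (r, s) <= pos (r, s').
Proof.
  intros Hr Hs Hs'. pose proof (slope_ge3 m Hm).
  assert (Hz : L (r, s)) by (split; simpl; auto; lia).
  assert (Hz' : L (r, s')) by (split; simpl; auto).
  set (u := ((r, s), (r, s'))).
  assert (Hu : ordered_pair u) by (unfold ordered_pair, u; simpl; auto).
  destruct (Rle_dec (inversion_gap u) 0) as [Hq|Hq];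
    [unfold inversion_gap, u in Hq; simpl in Hq; lra|].
  exfalso. apply Rnot_le_lt in Hq.
  destruct (dpi_periodic n d HD ltac:(lia)) as [T [HT [HTz Hvis]]].
  pose proof (iter_growth _ sort_step inversion_gap ordered_pair (fun u => fst (fst u) = 0%nat)
                (slope m) sort_step_gap u Hu Hq ltac:(lra)) as G.
  destruct (Hvis (r, s) Hz) as [i [Hi Ei]].
  assert (HE0 : fst (fst (Nat.iter i sort_step u)) = 0%nat).
  { destruct (G i) as [[_ [_ [Gi _]]] _]. unfold u in *.
    destruct (sort_step_iter i (r, s) (r, s')) as [E|E]; rewrite E in *; simpl in *;
      rewrite Ei in *; simpl in *; auto. }
  destruct (G T) as [GT1 [_ GT3]].
  assert (HM : slope m * inversion_gap u <= inversion_gap (Nat.iter T sort_step u))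
    by (apply GT3; exists i; auto).
  unfold u in *. destruct (sort_step_iter T (r, s) (r, s')) as [E|E]; rewrite E in *;
    rewrite !HTz in * by auto.
  - unfold inversion_gap in *. simpl in *. nra.
  - unfold ordered_pair in GT1. simpl in GT1. lia.
Qed.

Lemma piece_eq_of_pos_eq s s' : (s < N 0)%nat -> (s' < N 0)%nat ->
  pos (0%nat, s) = pos (0%nat, s') -> piece s = piece s'.
Proof.
  intros Hs Hs' E. pose proof (pos_piece_open s Hs) as [A1 A2].
  pose proof (pos_piece_open s' Hs') as [B1 B2]. rewrite E in A1, A2.
  destruct (Nat.lt_trichotomy (piece s) (piece s')) as [H|[H|H]]; auto; exfalso;
    apply le_INR in H; rewrite S_INR in H; lra.
Qed.

Definition collision (a a' : nat * nat) : Prop :=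
  L a /\ L a' /\ a <> a' /\ fst a = fst a' /\ pos a = pos a'.

Lemma collision_step a a' : collision a a' ->
  collision (pi a) (pi a') /\ (fst a = 0%nat -> piece (snd a) = piece (snd a')).
Proof.
  intros [Ha0 [Ha0' [Hne [Ef Ep]]]]. destruct a as [r s], a' as [r' s']. simpl in *. subst r'.
  assert (Hpn : pi (r, s) <> pi (r, s')) by (intros E; apply Hne; apply (dpi_inj n d HD); auto).
  assert (HL : L (pi (r, s)) /\ L (pi (r, s'))) by (split; apply (inL_dpi n d HD); auto).
  destruct (Nat.eq_dec r 0) as [->|Hr].
  - assert (Epc : piece s = piece s') by (apply piece_eq_of_pos_eq; auto; [apply Ha0|apply Ha0']).
    split; auto. split; [apply HL|]. split; [apply HL|]. split; auto. split.
    + rewrite <- (proj2 (piece_spec s (proj2 Ha0))), <- (proj2 (piece_spec s' (proj2 Ha0'))), Epc.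
      reflexivity.
    + rewrite !Hpos by auto. unfold step. simpl. rewrite Epc, Ep. reflexivity.
  - split; [|intros; lia]. assert (Hr2 : (0 < r < n)%nat) by (destruct Ha0; simpl in *; lia).
    destruct (Ha r Hr2) as [Ha1 _].
    split; [apply HL|]. split; [apply HL|]. split; auto. split.
    + rewrite (Ha1 s (proj2 Ha0)), (Ha1 s' (proj2 Ha0')). reflexivity.
    + rewrite !Hpos by auto. unfold step. simpl. rewrite (proj2 (Nat.eqb_neq r 0) Hr). auto.
Qed.

Lemma collision_shift z z' : collision z z' -> exists dd, cycle_shift d b c dd.
Proof.
  intros HR. assert (Hall : forall j, collision (Nat.iter j pi z) (Nat.iter j pi z')).
  { induction j; simpl; auto. apply collision_step; auto. }
  destruct HR as [Hz [Hz' _]]. pose proof (inL0 c (proj1 Hc)) as HLc.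
  destruct (dpi_reach n d HD z (0%nat, c) Hz HLc) as [i Hi].
  set (w := Nat.iter i pi z').
  assert (Hw : collision (0%nat, c) w) by (rewrite <- Hi; apply Hall).
  destruct (dpi_reach n d HD (0%nat, c) w HLc (proj1 (proj2 Hw))) as [dd Hdd].
  exists dd. split.
  - cbv zeta. rewrite Hdd. intros E. apply (proj1 (proj2 (proj2 Hw))). auto.
  - intros j. cbv zeta.
    assert (Hj : collision (Nat.iter j pi (0%nat, c)) (Nat.iter j pi w)).
    { unfold w. rewrite <- Hi, <- !Nat.iter_add. apply Hall. }
    rewrite <- Hdd, <- Nat.iter_add in Hj.
    split; [apply Hj|]. intros H0. apply (proj2 (collision_step _ _ Hj) H0).
Qed.

Section Injective.
Hypothesis Hnc : forall z z', ~ collision z z'.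

Definition position (r s : nat) : R := pos (r, s).

Definition orbit (y : pt) : Prop :=
  exists r s, (r < n)%nat /\ (s < N r)%nat /\ y = Ed r (position r s).

Lemma position_range r s : (r < n)%nat -> (s < N r)%nat -> 0 <= position r s < 1.
Proof.
  intros Hr Hs. assert (Hz : L (r, s)) by (split; auto).
  pose proof (pos_in01 _ Hz). pose proof (pos_lt1 _ Hz). unfold position. lra.
Qed.

Lemma position_inc r s s' : (r < n)%nat -> (s < s')%nat -> (s' < N r)%nat ->
  position r s < position r s'.
Proof.
  intros Hr Hs Hs'. unfold position. destruct (Rle_lt_or_eq_dec _ _ (pos_mono r s s' Hr Hs Hs'))
    as [|E]; auto. exfalso. apply (Hnc (r, s) (r, s')).
  split; [split; simpl; auto; lia|]. split; [split; simpl; auto|].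
  split; [intros E'; inversion E'; lia|]. auto.
Qed.

Definition label_pt (z : nat * nat) : pt := Ed (fst z) (position (fst z) (snd z)).

Lemma fmap_label_pt z : L z -> fmap n m (label_pt z) = label_pt (pi z).
Proof.
  intros Hz. destruct z as [r s]. unfold label_pt, position. cbn [fst snd].
  rewrite <- surjective_pairing.
  destruct (Nat.eq_dec r 0) as [->|Hr].
  - destruct (piece_spec s (proj2 Hz)) as [Hp Hj].
    rewrite Hpos by auto. unfold step. cbn [fst snd Nat.eqb].
    rewrite (fmap_e0_piece n m (piece s) (pos (0%nat, s)) Hp (pos_piece_open s (proj2 Hz))), Hj.
    reflexivity.
  - rewrite fmap_edge by (try lia; pose proof (pos_lt1 _ Hz); lra).
    assert (Hr2 : (0 < r < n)%nat) by (destruct Hz; simpl in *; lia).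
    rewrite (proj1 (Ha r Hr2) s (proj2 Hz)), Hpos by auto. unfold step. simpl.
    rewrite (proj2 (Nat.eqb_neq r 0) Hr). reflexivity.
Qed.

Lemma iter_label_pt i z : L z -> Nat.iter i (fmap n m) (label_pt z) = label_pt (Nat.iter i pi z).
Proof.
  intros Hz. induction i; auto. simpl. rewrite IHi. apply fmap_label_pt, (inL_iter n d HD); auto.
Qed.

Lemma orbit_iff y : orbit y <-> exists z, L z /\ y = label_pt z.
Proof.
  split.
  - intros [r [s [Hr [Hs ->]]]]. exists (r, s). split; [split|]; auto.
  - intros [[r s] [[Hr Hs] ->]]. exists r, s. auto.
Qed.

Lemma orbit_periodic : periodic_orbit n m orbit.
Proof.
  pose proof (inL_first n d HD 0 ltac:(lia)) as Hz0.
  destruct (dpi_periodic n d HD ltac:(lia)) as [T [HT [HTz _]]].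
  exists (label_pt (0%nat, 0%nat)), T.
  split; [simpl; split; [lia|apply position_range; auto; lia]|].
  split; auto. split; [rewrite iter_label_pt, HTz; auto|].
  intros y. rewrite orbit_iff. split.
  - intros [z [Hz ->]]. destruct (dpi_reach n d HD _ z Hz0 Hz) as [j <-].
    exists j. rewrite iter_label_pt; auto.
  - intros [j ->]. rewrite iter_label_pt by auto. exists (Nat.iter j pi (0%nat, 0%nat)).
    split; auto. apply (inL_iter n d HD); auto.
Qed.

Lemma orbit_labelling : labelling n N position orbit.
Proof.
  split; [lia|apply (dN_pos n d HD)|apply position_range|apply position_inc|reflexivity].
Qed.

Lemma orbit_is_first r q : (r < n)%nat -> (is_first orbit r q <-> q = label_pt (r, 0%nat)).
Proof. apply (is_first_iff n N position orbit orbit_labelling). Qed.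

Lemma orbit_star : star_orbit n m orbit.
Proof.
  pose proof (inL_first n d HD 0 ltac:(lia)) as Hz0.
  split; [apply orbit_periodic|]. split; [|split; [|split]].
  - intros H. assert (E : label_pt (0%nat, 0%nat) = Vc) by (apply H, orbit_iff; eauto).
    discriminate.
  - intros r Hr. exists (label_pt (r, 0%nat)). split.
    + apply orbit_iff. exists (r, 0%nat). split; auto. apply (inL_first n d HD); auto.
    + right. eexists. reflexivity.
  - exists (label_pt (0%nat, 0%nat)). split; [apply orbit_iff; eauto|].
    split; [right; eexists; reflexivity|].
    rewrite fmap_label_pt by auto. unfold label_pt. rewrite Hb2.
    intros [E|[t E]]; [discriminate|]. inversion E. lia.
  - intros r q Hr Hq. apply orbit_is_first in Hq; [|lia]. subst q.
    assert (HL : L (r, 0%nat)) by (apply (inL_first n d HD); lia).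
    apply orbit_is_first; [apply Nat.mod_upper_bound; lia|].
    rewrite fmap_label_pt by auto. unfold label_pt.
    destruct (Ha r Hr) as [Ha1 [_ Ha3]]. rewrite (Ha1 0%nat (proj2 HL)), Ha3. reflexivity.
Qed.

Lemma behaves_label s : (s < N 0)%nat -> forall g',
  dlab d s = g' <-> behaves n m orbit g' (label_pt (0%nat, s)).
Proof.
  intros Hs g'. destruct (piece_spec s Hs) as [Hp Hj].
  pose proof (pos_piece_open s Hs) as Hpc.
  assert (Hjn : (piece_edge (piece s) < n)%nat) by (rewrite Hj; pose proof (Hb4a s Hs); lia).
  assert (Himg : piece_map m (piece s) (position 0 s) =
                 position (piece_edge (piece s)) (pi2 (0%nat, s))).
  { unfold position. rewrite Hj, <- surjective_pairing, Hpos by (apply inL0; auto). reflexivity. }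
  pose proof (behaves_regular n m N position orbit orbit_labelling s (piece s) Hs Hp Hpc Hjn)
    as Hreg.
  pose proof (behaves_fold n m N position orbit orbit_labelling s (piece s) Hs Hp Hpc Hjn)
    as Hfold.
  unfold label_pt; cbn [fst snd].
  destruct (Nat.eq_dec s c) as [->|Hne].
  - rewrite (proj1 (proj2 Hc)), Hfold; [split; congruence| |right; apply fold_label_pos].
    rewrite Himg, Hj, dpi_fold. reflexivity.
  - rewrite Hreg, (piece_parity s Hs Hne).
    + destruct (dlab d s) eqn:Ls; [split; congruence|split; congruence|].
      exfalso. apply Hne, C_unique; auto.
    + rewrite Himg. apply position_inc; auto; [apply image_index_pos; auto|].
      rewrite Hj. apply (inL_dpi n d HD (0%nat, s)), inL0; auto.
Qed.

Lemma realize : exists P, in_calP n m k g P /\ data_of n m P d.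
Proof.
  exists orbit. split.
  - split; [apply orbit_star|]. intros p Hp. apply orbit_is_first in Hp; [|lia]. subst p.
    split.
    + rewrite fmap_label_pt by (apply (inL_first n d HD); lia). unfold label_pt.
      rewrite Hb2. right. eexists. reflexivity.
    + apply behaves_label; auto. apply (dN_pos n d HD). lia.
  - exists (fun r s => label_pt (r, s)). split; [|split; [|split; [|split]]].
    + intros r s Hr Hs. split; [exists r, s; auto|eexists; reflexivity].
    + intros r s s' Hr Hss Hs'. apply position_inc; auto.
    + intros r y Hr [r' [s' [Hr' [Hs' ->]]]] Hon.
      destruct Hon as [E|[t E]]; [discriminate|]. inversion E. subst r'. exists s'. auto.
    + intros r s Hr Hs. apply fmap_label_pt. split; auto.
    + apply behaves_label.
Qed.

End Injective.

End Positions.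

Fixpoint cycle_position (x : R) (i : nat) : R :=
  match i with
  | O => x
  | S i' => step (Nat.iter i' pi (0%nat, 0%nat)) (cycle_position x i')
  end.

Lemma cycle_position_affine i : exists A B, (forall x, cycle_position x i = A * x + B) /\
  1 <= Rabs A /\ ((0 < i)%nat -> slope m <= Rabs A).
Proof.
  pose proof (slope_ge3 m Hm) as HM.
  induction i as [|i [A [B [HY [H1 H2]]]]].
  - exists 1, 0. split; [intros; simpl; ring|]. rewrite Rabs_R1. split; [lra|intros; lia].
  - simpl. unfold step. destruct (Nat.eqb (fst (Nat.iter i pi (0%nat, 0%nat))) 0) eqn:E.
    + unfold piece_map. set (p := piece (snd (Nat.iter i pi (0%nat, 0%nat)))).
      destruct (Nat.odd p).
      * exists (- (slope m * A)), (INR p + 1 - slope m * B). split; [intros x; rewrite HY; ring|].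
        rewrite Rabs_Ropp, Rabs_mult, (Rabs_right (slope m)) by lra. split; nra.
      * exists (slope m * A), (slope m * B - INR p). split; [intros x; rewrite HY; ring|].
        rewrite Rabs_mult, (Rabs_right (slope m)) by lra. split; nra.
    + exists A, B. split; auto. split; auto. intros _.
      destruct i; [discriminate|]. apply H2. lia.
Qed.

(** Composing the steps once around the cycle gives an affine map of slope at least
    [2m+1]; its fixed point, propagated along the cycle, gives the positions. *)
Lemma positions_exist : exists pos : nat * nat -> R, forall z, L z -> pos (pi z) = step z (pos z).
Proof.
  pose proof (slope_ge3 m Hm) as HM.
  destruct (dpi_period n d HD ltac:(lia)) as [T [HT [HTz [Huniq Hall]]]].
  destruct (cycle_position_affine T) as [A [B [HY [_ HA]]]]. specialize (HA HT).
  assert (HA1 : 1 - A <> 0)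
    by (intros E; replace A with 1 in HA by lra; rewrite Rabs_R1 in HA; lra).
  set (x0 := B / (1 - A)).
  assert (Hfix : cycle_position x0 T = x0) by (rewrite HY; unfold x0; field; auto).
  set (idx := fun z => epsilon (inhabits 0%nat)
                         (fun i => (i < T)%nat /\ Nat.iter i pi (0%nat, 0%nat) = z)).
  assert (Hidx : forall z, L z -> (idx z < T)%nat /\ Nat.iter (idx z) pi (0%nat, 0%nat) = z).
  { intros z Hz. apply epsilon_spec. destruct (Hall z Hz) as [i [Hi Ei]]. exists i. auto. }
  exists (fun z => cycle_position x0 (idx z)).
  intros z Hz. destruct (Hidx z Hz) as [Hi Ei].
  destruct (Hidx (pi z) (inL_dpi n d HD z Hz)) as [Hi' Ei'].
  destruct (Nat.eq_dec (S (idx z)) T) as [ET|ET].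
  - assert (Hz0 : idx (pi z) = 0%nat).
    { apply Huniq; auto. rewrite Ei'. simpl. rewrite <- Ei, <- Nat.iter_succ, ET. auto. }
    rewrite Hz0. simpl. rewrite <- Hfix at 1. rewrite <- ET. simpl. rewrite Ei. reflexivity.
  - assert (Hz1 : idx (pi z) = S (idx z)).
    { apply Huniq; auto; [lia|]. rewrite Ei', Nat.iter_succ, Ei. auto. }
    rewrite Hz1. simpl. rewrite Ei. reflexivity.
Qed.

End Choice.

Lemma piece_fold b : piece d b c = b.
Proof.
  unfold piece; cbv zeta. rewrite dpi_fold, (proj1 (proj2 Hc)). cbn [fst].
  destruct (Nat.eqb m 0) eqn:E; [apply Nat.eqb_eq in E; lia|reflexivity].
Qed.

Lemma piece_other b b' s : (s < N 0)%nat -> s <> c -> piece d b s = piece d b' s.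
Proof.
  intros Hs Hne. unfold piece; cbv zeta. destruct (dlab d s) eqn:Ls; auto.
  exfalso. apply Hne, C_unique; auto.
Qed.

(** Only the piece of [c] depends on [b]; a shift symmetry moves it onto another label
    of [e_0], so such a symmetry cannot exist for two different choices of [b]. *)
Lemma no_double_shift b1 b2 d1 d2 : b1 <> b2 ->
  cycle_shift d b1 c d1 -> cycle_shift d b2 c d2 -> False.
Proof.
  intros Hb [N1 S1] [N2 S2]. cbv zeta in *.
  assert (Hz : forall j, L (Nat.iter j pi (0%nat, c)))
    by (intros j; apply (inL_iter n d HD), inL0, Hc).
  assert (Hother : forall j b b', fst (Nat.iter j pi (0%nat, c)) = 0%nat ->
            Nat.iter j pi (0%nat, c) <> (0%nat, c) ->
            piece d b (snd (Nat.iter j pi (0%nat, c))) =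
            piece d b' (snd (Nat.iter j pi (0%nat, c)))).
  { intros j b b' H0 Hne. pose proof (proj2 (Hz j)) as Hs. rewrite H0 in Hs.
    apply piece_other; auto.
    intros E. apply Hne. rewrite (surjective_pairing (Nat.iter j pi (0%nat, c))), H0, E.
    reflexivity. }
  destruct (S1 0%nat) as [A1 A2]. destruct (S2 0%nat) as [F1 F2]. simpl in A1, F1.
  specialize (A2 eq_refl). specialize (F2 eq_refl). simpl Nat.iter in A2, F2.
  rewrite piece_fold in A2, F2.
  assert (C1 : piece d b2 (snd (Nat.iter d1 pi (0%nat, c))) = b1)
    by (rewrite <- (Hother d1 b1); auto).
  destruct (S2 d1) as [D1 D2]. specialize (D2 (eq_sym A1)). rewrite C1 in D2.
  destruct (classic (Nat.iter (d1 + d2) pi (0%nat, c) = (0%nat, c))) as [Ec|Ec].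
  - rewrite Ec, piece_fold in D2. auto.
  - assert (G1 : piece d b1 (snd (Nat.iter (d1 + d2) pi (0%nat, c))) = b1)
      by (rewrite (Hother _ b1 b2); auto; congruence).
    destruct (S1 d2) as [_ H2]. specialize (H2 (eq_sym F1)).
    rewrite Nat.add_comm, G1 in H2.
    assert (I1 : piece d b2 (snd (Nat.iter d2 pi (0%nat, c))) = b1)
      by (rewrite <- (Hother d2 b1); auto).
    congruence.
Qed.

Lemma realizable : exists P, in_calP n m k g P /\ data_of n m P d.
Proof.
  assert (Hcase : forall b, b = (2 * m - 1)%nat \/ b = (2 * m)%nat ->
    (exists P, in_calP n m k g P /\ data_of n m P d) \/ exists dd, cycle_shift d b c dd).
  { intros b Hb. destruct (positions_exist b Hb) as [pos Hpos].
    destruct (classic (forall z z', ~ collision pos z z')) as [Hnc|Hcol].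
    - left. apply (realize b Hb pos Hpos Hnc).
    - right. apply not_all_ex_not in Hcol as [z Hz]. apply not_all_ex_not in Hz as [z' Hz'].
      apply NNPP in Hz'. eapply collision_shift; eauto. }
  destruct (Hcase (2 * m - 1)%nat) as [|[d1 S1]]; auto.
  destruct (Hcase (2 * m)%nat) as [|[d2 S2]]; auto.
  exfalso. apply (no_double_shift (2 * m - 1) (2 * m) d1 d2 ltac:(lia) S1 S2).
Qed.

End Realization.

(** * Reading the data off a *-orbit *)

Lemma periodic_orbit_valid n m P y : (m < n)%nat -> periodic_orbit n m P -> P y -> valid n y.
Proof.
  intros Hmn [x [per [Hx [_ [_ HPx]]]]] Hy. apply HPx in Hy. destruct Hy as [j ->].
  induction j; simpl; auto. apply fmap_valid; auto.
Qed.

(** [v] is fixed, so a periodic orbit through [v] is [{v}]. *)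
Lemma periodic_orbit_Vc n m P : periodic_orbit n m P -> P Vc -> forall y, P y <-> y = Vc.
Proof.
  intros [x [per [_ [Hper [Hper_x HPx]]]]] HV y.
  assert (HVc : forall j, Nat.iter j (fmap n m) Vc = Vc)
    by (induction j; simpl; auto; rewrite IHj; auto).
  assert (Hmul : forall q, Nat.iter (q * per) (fmap n m) x = x).
  { induction q; simpl; auto. rewrite Nat.iter_add, IHq. exact Hper_x. }
  apply HPx in HV. destruct HV as [i Hi].
  assert (Hx0 : x = Vc).
  { rewrite <- (Hmul (S i)). replace (S i * per)%nat with ((S i * per - i) + i)%nat by nia.
    rewrite Nat.iter_add, <- Hi. apply HVc. }
  rewrite HPx. split.
  - intros [j ->]. rewrite Hx0. apply HVc.
  - intros ->. exists 0%nat. auto.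
Qed.

Section Reading.
Variables (n m k : nat) (g : cls) (d : data) (P : pt -> Prop) (lbl : nat -> nat -> pt).
Local Notation N := (dN d).
Local Notation pi := (dpi d).
Local Notation L := (inL n d).
Local Notation pi1 z := (fst (dpi d z)).
Local Notation pi2 z := (snd (dpi d z)).
Hypothesis Hm : (0 < m)%nat.
Hypothesis Hmn : (2 * m <= n)%nat.
Hypothesis Hk : (k < m)%nat.
Hypothesis HD : in_Dn n d.
Hypothesis HcalP : in_calP n m k g P.
Hypothesis Hlbl : forall r s, (r < n)%nat -> (s < N r)%nat ->
  P (lbl r s) /\ exists t, lbl r s = Ed r t.
Hypothesis Hlbl_inc : forall r s s', (r < n)%nat -> (s < s')%nat -> (s' < N r)%nat ->
  Defs.pos (lbl r s) < Defs.pos (lbl r s').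
Hypothesis Hlbl_all : forall r y, (r < n)%nat -> P y -> on_edge r y ->
  exists s, (s < N r)%nat /\ y = lbl r s.
Hypothesis Hlbl_fmap : forall r s, (r < n)%nat -> (s < N r)%nat ->
  fmap n m (lbl r s) = lbl (fst (pi (r, s))) (snd (pi (r, s))).
Hypothesis Hlbl_class : forall s, (s < N 0)%nat -> forall g',
  dlab d s = g' <-> behaves n m P g' (lbl 0%nat s).

Definition lpos (r s : nat) : R := Defs.pos (lbl r s).

Lemma lbl_eq r s : (r < n)%nat -> (s < N r)%nat -> lbl r s = Ed r (lpos r s).
Proof.
  intros Hr Hs. destruct (Hlbl r s Hr Hs) as [_ [t Ht]]. unfold lpos. rewrite Ht. reflexivity.
Qed.

Lemma data_labelling : labelling n N lpos P.
Proof.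
  split; [lia|apply (dN_pos n d HD)| | |].
  - intros r s Hr Hs. pose proof (periodic_orbit_valid n m P _ ltac:(lia) (proj1 (proj1 HcalP))
      (proj1 (Hlbl r s Hr Hs))) as Hv. rewrite lbl_eq in Hv by auto. apply Hv.
  - apply Hlbl_inc.
  - intros y. split.
    + intros Hy. destruct y as [|r t].
      * exfalso. apply (proj1 (proj2 (proj1 HcalP))).
        apply (periodic_orbit_Vc n m P (proj1 (proj1 HcalP)) Hy).
      * destruct (periodic_orbit_valid n m P _ ltac:(lia) (proj1 (proj1 HcalP)) Hy) as [Hr _].
        destruct (Hlbl_all r (Ed r t) Hr Hy) as [s [Hs E]]; [right; eexists; reflexivity|].
        exists r, s. rewrite E, lbl_eq; auto.
    + intros [r [s [Hr [Hs ->]]]]. rewrite <- lbl_eq by auto. apply Hlbl; auto.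
Qed.

Lemma lpos_range r s : (r < n)%nat -> (s < N r)%nat -> 0 <= lpos r s < 1.
Proof. apply (lab_range data_labelling). Qed.

Lemma lpos_first_le r s : (r < n)%nat -> (s < N r)%nat -> lpos r 0 <= lpos r s.
Proof. apply (X_first_le n N lpos P data_labelling). Qed.

Lemma lpos_lt_index r a b : (r < n)%nat -> (a < N r)%nat -> (b < N r)%nat ->
  lpos r a < lpos r b -> (a < b)%nat.
Proof. apply (X_lt_index n N lpos P data_labelling). Qed.

Lemma fmap_lpos r s : (r < n)%nat -> (s < N r)%nat ->
  fmap n m (Ed r (lpos r s)) = Ed (pi1 (r, s)) (lpos (pi1 (r, s)) (pi2 (r, s))).
Proof.
  intros Hr Hs. rewrite <- lbl_eq, Hlbl_fmap by auto.
  destruct (inL_dpi n d HD (r, s)) as [H1 H2]; [split; auto|]. apply lbl_eq; auto.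
Qed.

Lemma is_first_lpos r q : (r < n)%nat -> (is_first P r q <-> q = Ed r (lpos r 0)).
Proof. apply (is_first_iff n N lpos P data_labelling). Qed.

Lemma image_off_e0 r s : (0 < r < n)%nat -> (s < N r)%nat ->
  pi1 (r, s) = ((r + m) mod n)%nat /\ lpos (pi1 (r, s)) (pi2 (r, s)) = lpos r s.
Proof.
  intros Hr Hs. pose proof (fmap_lpos r s ltac:(lia) Hs) as E.
  rewrite fmap_edge in E by (try lia; pose proof (lpos_range r s ltac:(lia) Hs); lra).
  inversion E. auto.
Qed.

Lemma first_image_off_e0 r : (0 < r < n)%nat -> pi (r, 0%nat) = (((r + m) mod n)%nat, 0%nat).
Proof.
  intros Hr. assert (HL : L (r, 0%nat)) by (apply (inL_first n d HD); lia).
  destruct (image_off_e0 r 0 Hr (proj2 HL)) as [E1 _].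
  assert (Hf : is_first P r (Ed r (lpos r 0))) by (apply is_first_lpos; [lia|reflexivity]).
  pose proof (proj2 (proj2 (proj2 (proj2 (proj1 HcalP)))) r _ Hr Hf) as H5.
  rewrite (fmap_lpos r 0 ltac:(lia) (proj2 HL)), E1 in H5.
  apply is_first_lpos in H5; [|apply Nat.mod_upper_bound; lia].
  assert (Hx : lpos ((r + m) mod n) (pi2 (r, 0%nat)) = lpos ((r + m) mod n) 0)
    by (inversion H5; auto).
  destruct (inL_dpi n d HD _ HL) as [A1 A2]. rewrite E1 in A1, A2.
  rewrite (surjective_pairing (pi (r, 0%nat))), E1. f_equal.
  destruct (Nat.eq_dec (pi2 (r, 0%nat)) 0) as [|Hne]; auto. exfalso.
  assert (lpos ((r + m) mod n) 0 < lpos ((r + m) mod n) (pi2 (r, 0%nat)))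
    by (apply Hlbl_inc; auto; lia). lra.
Qed.

Lemma dpi_first_moves : pi (0%nat, 0%nat) <> (0%nat, 0%nat).
Proof.
  intros E. assert (Hall : forall j, Nat.iter j pi (0%nat, 0%nat) = (0%nat, 0%nat)).
  { induction j; simpl; auto. rewrite IHj. auto. }
  destruct (dpi_reach n d HD (0%nat, 0%nat) (1%nat, 0%nat)) as [j Hj];
    try (apply (inL_first n d HD); lia).
  rewrite Hall in Hj. discriminate.
Qed.

(** A label at the initial point of [e_0] would be fixed, as [f] fixes that point. *)
Lemma lpos00_pos : 0 < lpos 0 0.
Proof.
  assert (HL : L (0%nat, 0%nat)) by (apply (inL_first n d HD); lia).
  destruct (Rle_lt_or_eq_dec _ _ (proj1 (lpos_range 0 0 ltac:(lia) (proj2 HL)))) as [|E]; auto.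
  exfalso. pose proof (fmap_lpos 0 0 ltac:(lia) (proj2 HL)) as F. rewrite <- E in F.
  rewrite (fmap_e0_breakpoint n m 0 0) in F by (simpl; try lra; lia). simpl in F.
  inversion F as [[E1 E2]]. destruct (inL_dpi n d HD _ HL) as [A1 A2].
  rewrite <- E1 in A2.
  apply dpi_first_moves. rewrite (surjective_pairing (pi (0%nat, 0%nat))), <- E1. f_equal.
  destruct (Nat.eq_dec (pi2 (0%nat, 0%nat)) 0) as [|Hne]; auto. exfalso.
  assert (lpos 0 0 < lpos 0 (pi2 (0%nat, 0%nat))) by (apply Hlbl_inc; auto; lia). lra.
Qed.

(** First points off [e_0] keep their position until the cycle returns to [e_0]. *)
Lemma first_lpos_pos r : (0 < r < n)%nat -> 0 < lpos r 0.
Proof.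
  intros Hr. destruct (Rle_lt_or_eq_dec _ _ (proj1 (lpos_range r 0 ltac:(lia)
    (dN_pos n d HD r ltac:(lia))))) as [|HX]; auto. exfalso.
  assert (HL : L (r, 0%nat)) by (apply (inL_first n d HD); lia).
  destruct (dpi_reach n d HD _ _ HL (inL_first n d HD 0 ltac:(lia))) as [i Hi].
  revert r Hr HX HL Hi. induction i as [|i IH]; intros r Hr HX HL Hi.
  - inversion Hi. lia.
  - rewrite Nat.iter_succ_r, first_image_off_e0 in Hi by auto.
    destruct (image_off_e0 r 0 Hr (proj2 HL)) as [E1 E2].
    rewrite E1, (f_equal snd (first_image_off_e0 r Hr)) in E2.
    assert (Hr' : ((r + m) mod n < n)%nat) by (apply Nat.mod_upper_bound; lia).
    destruct (Nat.eq_dec ((r + m) mod n) 0) as [E0|E0].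
    + rewrite E0 in E2. pose proof lpos00_pos. simpl in E2. lra.
    + apply (IH ((r + m) mod n)); auto; [lia|simpl in E2; lra|].
      apply (inL_first n d HD); auto.
Qed.

Definition piece_of (s : nat) : nat := floorN (slope m * lpos 0 s).

(** Labels on [e_0] sit strictly inside a piece: a breakpoint would be sent to [v] or
    to an initial point of an edge. *)
Lemma piece_of_spec s : (s < N 0)%nat ->
  (piece_of s <= 2 * m)%nat /\ INR (piece_of s) < slope m * lpos 0 s < INR (piece_of s) + 1 /\
  pi1 (0%nat, s) = piece_edge (piece_of s) /\
  lpos (pi1 (0%nat, s)) (pi2 (0%nat, s)) = piece_map m (piece_of s) (lpos 0 s).
Proof.
  intros Hs. pose proof (lpos_range 0 s ltac:(lia) Hs) as Ht. pose proof (slope_pos m).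
  assert (Hp : (piece_of s <= 2 * m)%nat) by (apply floorN_piece_le; auto).
  pose proof (floorN_spec (slope m * lpos 0 s) ltac:(nra)) as [F1 F2]. fold (piece_of s) in F1, F2.
  pose proof (fmap_lpos 0 s ltac:(lia) Hs) as F.
  destruct (inL_dpi n d HD (0%nat, s)) as [A1 A2]; [split; simpl; auto; lia|].
  destruct (Rle_lt_or_eq_dec _ _ F1) as [Hlt|Heq].
  - rewrite (fmap_e0_piece n m (piece_of s) (lpos 0 s) Hp (conj Hlt F2)) in F.
    inversion F. auto.
  - exfalso. rewrite (fmap_e0_breakpoint n m (piece_of s) (lpos 0 s) Heq Hp) in F.
    pose proof lpos00_pos. pose proof (lpos_first_le 0 s ltac:(lia) Hs).
    destruct (Nat.eqb (piece_of s) 0) eqn:Ep.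
    + apply Nat.eqb_eq in Ep. rewrite Ep in Heq. simpl in Heq. nra.
    + destruct (Nat.odd (piece_of s)) eqn:Eo; [discriminate|].
      assert (E1 : (piece_of s / 2)%nat = pi1 (0%nat, s)) by congruence.
      assert (E2 : 0 = lpos (pi1 (0%nat, s)) (pi2 (0%nat, s))) by congruence.
      rewrite <- E1 in A1, A2, E2.
      destruct (odd_cases (piece_of s)) as [[Ho _]|[_ [q Hq]]]; [congruence|].
      apply Nat.eqb_neq in Ep. rewrite Hq, Nat.mul_comm, Nat.div_mul in A1, A2, E2 by lia.
      pose proof (first_lpos_pos q ltac:(lia)). pose proof (lpos_first_le q _ A1 A2). lra.
Qed.

Lemma piece_of_le s1 s2 : (s1 < s2)%nat -> (s2 < N 0)%nat -> (piece_of s1 <= piece_of s2)%nat.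
Proof.
  intros H12 Hs2. pose proof (slope_pos m). pose proof (lpos_range 0 s1 ltac:(lia) ltac:(lia)).
  assert (lpos 0 s1 < lpos 0 s2) by (apply Hlbl_inc; auto; lia).
  apply floorN_le; nra.
Qed.

Lemma image_order_same_piece s1 s2 : (s1 < s2)%nat -> (s2 < N 0)%nat -> piece_of s1 = piece_of s2 ->
  (Nat.odd (piece_of s1) = true ->
     lpos (pi1 (0%nat, s2)) (pi2 (0%nat, s2)) < lpos (pi1 (0%nat, s1)) (pi2 (0%nat, s1))) /\
  (Nat.odd (piece_of s1) = false ->
     lpos (pi1 (0%nat, s1)) (pi2 (0%nat, s1)) < lpos (pi1 (0%nat, s2)) (pi2 (0%nat, s2))).
Proof.
  intros H12 Hs2 Ep.
  rewrite (proj2 (proj2 (proj2 (piece_of_spec s1 ltac:(lia))))),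
    (proj2 (proj2 (proj2 (piece_of_spec s2 Hs2)))), <- Ep.
  assert (lpos 0 s1 < lpos 0 s2) by (apply Hlbl_inc; auto; lia).
  split; intros Ho; [apply piece_map_gt_iff|apply piece_map_lt_iff]; auto.
Qed.

Lemma first_label_edge : pi1 (0%nat, 0%nat) = k.
Proof.
  assert (Hf : is_first P 0 (Ed 0 (lpos 0 0))) by (apply is_first_lpos; [lia|reflexivity]).
  destruct (proj2 HcalP _ Hf) as [Hon _].
  rewrite (fmap_lpos 0 0 ltac:(lia) (dN_pos n d HD 0 ltac:(lia))) in Hon.
  destruct Hon as [E|[t E]]; [discriminate|]. inversion E. auto.
Qed.

(** Only the last edge [e_m] can receive a label of [e_0] at its first point: the first
    points of the other edges [e_j], [j < m], are images of first points off [e_0]. *)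
Lemma first_point_image_last_edge s : (s < N 0)%nat -> pi2 (0%nat, s) = 0%nat ->
  pi1 (0%nat, s) = m /\ (0 < s)%nat.
Proof.
  intros Hs H2. destruct (piece_of_spec s Hs) as [Hp [_ [Hj _]]].
  assert (Hjm : (pi1 (0%nat, s) <= m)%nat)
    by (rewrite Hj; unfold piece_edge; pose proof (half_bounds (piece_of s + 1)); lia).
  assert (Hm' : pi1 (0%nat, s) = m).
  { destruct (Nat.eq_dec (pi1 (0%nat, s)) m) as [|Hne]; auto. exfalso.
    set (r := (pi1 (0%nat, s) + n - m)%nat).
    assert (Hr : (0 < r < n)%nat) by (unfold r; lia).
    assert (Hpr : pi (r, 0%nat) = pi (0%nat, s)).
    { rewrite first_image_off_e0, (surjective_pairing (pi (0%nat, s))), H2 by auto.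
      f_equal. unfold r. rewrite mod_sub; lia. }
    apply (dpi_inj n d HD) in Hpr; [inversion Hpr; lia|apply (inL_first n d HD); lia|].
    split; simpl; auto; lia. }
  split; auto. destruct s; [|lia]. exfalso. rewrite first_label_edge in Hm'. lia.
Qed.

Lemma dlab_class s : (s < N 0)%nat ->
  dlab d s = if Nat.eqb (pi2 (0%nat, s)) 0 then cC
             else if Nat.odd (piece_of s) then cA else cB.
Proof.
  intros Hs. destruct (piece_of_spec s Hs) as [Hp [Hpc [Hj Himg]]].
  destruct (inL_dpi n d HD (0%nat, s)) as [A1 A2]; [split; simpl; auto; lia|].
  assert (Hjn : (piece_edge (piece_of s) < n)%nat) by (rewrite <- Hj; auto).
  apply (Hlbl_class s Hs). rewrite lbl_eq by (auto; lia).
  destruct (Nat.eqb (pi2 (0%nat, s)) 0) eqn:E2.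
  - apply Nat.eqb_eq in E2. destruct (first_point_image_last_edge s Hs E2) as [_ Hs0].
    apply (behaves_fold n m N lpos P data_labelling s (piece_of s) Hs Hp Hpc Hjn);
      [|right; auto|reflexivity].
    rewrite <- Himg, <- Hj, E2. reflexivity.
  - apply Nat.eqb_neq in E2.
    apply (behaves_regular n m N lpos P data_labelling s (piece_of s) Hs Hp Hpc Hjn);
      [|reflexivity].
    rewrite <- Himg, <- Hj. apply Hlbl_inc; auto; lia.
Qed.

Lemma dlab_fold_iff s : (s < N 0)%nat -> (dlab d s = cC <-> pi2 (0%nat, s) = 0%nat).
Proof.
  intros Hs. rewrite dlab_class by auto.
  destruct (Nat.eqb (pi2 (0%nat, s)) 0) eqn:E; [apply Nat.eqb_eq in E|apply Nat.eqb_neq in E];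
    [tauto|]. destruct (Nat.odd (piece_of s)); split; intros; congruence.
Qed.

Lemma dlab_regular s : (s < N 0)%nat -> pi2 (0%nat, s) <> 0%nat ->
  dlab d s = if Nat.odd (piece_of s) then cA else cB.
Proof. intros Hs H. rewrite dlab_class, (proj2 (Nat.eqb_neq _ 0) H) by auto. reflexivity. Qed.

Lemma cond_a r : (0 < r < n)%nat ->
  (forall s, (s < N r)%nat -> pi1 (r, s) = ((r + m) mod n)%nat) /\
  (forall s1 s2, (s1 < s2)%nat -> (s2 < N r)%nat -> (pi2 (r, s1) < pi2 (r, s2))%nat) /\
  pi2 (r, 0%nat) = 0%nat.
Proof.
  intros Hr. split; [|split].
  - intros s Hs. apply (image_off_e0 r s Hr Hs).
  - intros s1 s2 H12 Hs2.
    destruct (image_off_e0 r s1 Hr ltac:(lia)) as [E1 X1].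
    destruct (image_off_e0 r s2 Hr Hs2) as [E2 X2].
    destruct (inL_dpi n d HD (r, s1)) as [A1 A2]; [split; simpl; lia|].
    destruct (inL_dpi n d HD (r, s2)) as [B1 B2]; [split; simpl; lia|].
    rewrite E1 in X1, A1, A2. rewrite E2 in X2, B2.
    apply (lpos_lt_index ((r + m) mod n)); auto. rewrite X1, X2. apply Hlbl_inc; lia.
  - rewrite first_image_off_e0; auto.
Qed.

Lemma cond_b1 : dlab d 0%nat = g.
Proof.
  assert (Hf : is_first P 0 (Ed 0 (lpos 0 0))) by (apply is_first_lpos; [lia|reflexivity]).
  apply (Hlbl_class 0 (dN_pos n d HD 0 ltac:(lia))).
  rewrite lbl_eq by (try lia; apply (dN_pos n d HD); lia). apply (proj2 HcalP _ Hf).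
Qed.

Lemma cond_b3 s : (s < N 0)%nat -> dlab d s = cC -> pi (0%nat, s) = (m, 0%nat).
Proof.
  intros Hs Hl. apply dlab_fold_iff in Hl; auto.
  rewrite (surjective_pairing (pi (0%nat, s))), (proj1 (first_point_image_last_edge s Hs Hl)), Hl. auto.
Qed.

Lemma cond_b4b s1 s2 : (s1 < s2)%nat -> (s2 < N 0)%nat -> (pi1 (0%nat, s1) <= pi1 (0%nat, s2))%nat.
Proof.
  intros H12 Hs2. rewrite (proj1 (proj2 (proj2 (piece_of_spec s1 ltac:(lia))))),
    (proj1 (proj2 (proj2 (piece_of_spec s2 Hs2)))).
  unfold piece_edge. apply Nat.Div0.div_le_mono. pose proof (piece_of_le s1 s2 H12 Hs2). lia.
Qed.

Lemma cond_b4a s : (s < N 0)%nat -> (k <= pi1 (0%nat, s) <= m)%nat.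
Proof.
  intros Hs. split.
  - rewrite <- first_label_edge. destruct s; [lia|]. apply cond_b4b; lia.
  - destruct (piece_of_spec s Hs) as [Hp [_ [E _]]]. rewrite E. unfold piece_edge.
    pose proof (half_bounds (piece_of s + 1)). lia.
Qed.

Lemma same_edge_pieces s1 s2 : (s1 < s2)%nat -> (s2 < N 0)%nat ->
  pi1 (0%nat, s1) = pi1 (0%nat, s2) ->
  piece_of s1 = piece_of s2 \/
  (Nat.odd (piece_of s1) = true /\ Nat.odd (piece_of s2) = false).
Proof.
  intros H12 Hs2 Ej. pose proof (piece_of_le s1 s2 H12 Hs2).
  destruct (piece_of_spec s1 ltac:(lia)) as [_ [_ [E1 _]]].
  destruct (piece_of_spec s2 Hs2) as [_ [_ [E2 _]]].
  destruct (piece_edge_parity (piece_of s1)) as [O1 V1].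
  destruct (piece_edge_parity (piece_of s2)) as [O2 V2].
  destruct (Nat.odd (piece_of s1)) eqn:P1; destruct (Nat.odd (piece_of s2)) eqn:P2;
    [left|right; auto|left|left];
    try specialize (O1 eq_refl); try specialize (V1 eq_refl);
    try specialize (O2 eq_refl); try specialize (V2 eq_refl); lia.
Qed.

Lemma cond_b5 s1 s2 : (s1 < s2)%nat -> (s2 < N 0)%nat -> pi1 (0%nat, s1) = pi1 (0%nat, s2) ->
  (dlab d s1 = cB \/ dlab d s1 = cC) -> dlab d s2 = cB.
Proof.
  intros H12 Hs2 Ej Hl. assert (Hs1 : (s1 < N 0)%nat) by lia.
  destruct (inL_dpi n d HD (0%nat, s1)) as [A1 A2]; [split; simpl; lia|].
  destruct (inL_dpi n d HD (0%nat, s2)) as [B1 B2]; [split; simpl; lia|].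
  pose proof (image_order_same_piece s1 s2 H12 Hs2) as Hord.
  assert (H2 : pi2 (0%nat, s2) <> 0%nat).
  { intros E2. destruct Hl as [Hl|Hl].
    - assert (pi2 (0%nat, s1) <> 0%nat) by (intros E; rewrite <- dlab_fold_iff in E; congruence).
      rewrite dlab_regular in Hl by auto.
      destruct (same_edge_pieces s1 s2 H12 Hs2 Ej) as [Ep|[O1 _]];
        [|rewrite O1 in Hl; discriminate].
      destruct (Nat.odd (piece_of s1)) eqn:O1; [discriminate|].
      pose proof (proj2 (Hord Ep) eq_refl) as Hlt. rewrite <- Ej, E2 in Hlt.
      pose proof (lpos_first_le _ _ A1 A2). lra.
    - apply dlab_fold_iff in Hl; auto. assert (Heq : pi (0%nat, s1) = pi (0%nat, s2))
        by (rewrite (surjective_pairing (pi (0%nat, s1))), (surjective_pairing (pi (0%nat, s2)));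
            congruence).
      apply (dpi_inj n d HD) in Heq; [inversion Heq; lia|split; simpl; lia|split; simpl; lia]. }
  rewrite dlab_regular by auto. destruct (Nat.odd (piece_of s2)) eqn:O2; auto. exfalso.
  destruct (same_edge_pieces s1 s2 H12 Hs2 Ej) as [Ep|[_ O2']]; [|congruence].
  rewrite <- Ep in O2. pose proof (proj1 (Hord Ep) O2) as Hlt.
  destruct Hl as [Hl|Hl].
  - assert (pi2 (0%nat, s1) <> 0%nat) by (intros E; rewrite <- dlab_fold_iff in E; congruence).
    rewrite dlab_regular, O2 in Hl by auto. discriminate.
  - apply dlab_fold_iff in Hl; auto. rewrite Hl, <- Ej in Hlt.
    pose proof (lpos_first_le _ _ A1 ltac:(rewrite Ej; exact B2)). lra.
Qed.

Lemma cond_b6 s1 s2 : (s1 < s2)%nat -> (s2 < N 0)%nat -> pi1 (0%nat, s1) = pi1 (0%nat, s2) ->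
  (dlab d s1 = cA -> dlab d s2 = cA -> (pi2 (0%nat, s1) > pi2 (0%nat, s2))%nat) /\
  (dlab d s1 = cB -> dlab d s2 = cB -> (pi2 (0%nat, s1) < pi2 (0%nat, s2))%nat).
Proof.
  intros H12 Hs2 Ej. assert (Hs1 : (s1 < N 0)%nat) by lia.
  destruct (inL_dpi n d HD (0%nat, s1)) as [A1 A2]; [split; simpl; lia|].
  destruct (inL_dpi n d HD (0%nat, s2)) as [B1 B2]; [split; simpl; lia|].
  pose proof (image_order_same_piece s1 s2 H12 Hs2) as Hord.
  assert (Hreg : forall s, (s < N 0)%nat -> dlab d s <> cC ->
            dlab d s = if Nat.odd (piece_of s) then cA else cB).
  { intros s Hs Hl. apply dlab_regular; auto. intros E. apply Hl, dlab_fold_iff; auto. }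
  split; intros L1 L2.
  - rewrite (Hreg s1 Hs1) in L1 by congruence. rewrite (Hreg s2 Hs2) in L2 by congruence.
    destruct (Nat.odd (piece_of s1)) eqn:O1; [|discriminate].
    destruct (Nat.odd (piece_of s2)) eqn:O2; [|discriminate].
    destruct (same_edge_pieces s1 s2 H12 Hs2 Ej) as [Ep|[_ ?]]; [|congruence].
    apply (lpos_lt_index (pi1 (0%nat, s1))); auto; [rewrite Ej; auto|].
    rewrite Ej at 1. apply (Hord Ep); auto.
  - rewrite (Hreg s1 Hs1) in L1 by congruence. rewrite (Hreg s2 Hs2) in L2 by congruence.
    destruct (Nat.odd (piece_of s1)) eqn:O1; [discriminate|].
    destruct (Nat.odd (piece_of s2)) eqn:O2; [discriminate|].
    destruct (same_edge_pieces s1 s2 H12 Hs2 Ej) as [Ep|[? _]]; [|congruence].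
    apply (lpos_lt_index (pi1 (0%nat, s1))); auto; [rewrite Ej; auto|].
    rewrite Ej at 2. apply (Hord Ep); auto.
Qed.

Lemma data_cond_ab : cond_ab n m k g d.
Proof.
  split; [exact cond_a|]. split; [exact cond_b1|]. split; [exact first_label_edge|].
  split; [exact cond_b3|]. split; [exact cond_b4a|]. split; [exact cond_b4b|].
  split; [exact cond_b5|exact cond_b6].
Qed.

End Reading.

Theorem lemma2p6 (n m k : nat) (g : cls) (d : data) :
  (0 < m)%nat -> (2 * m <= n)%nat -> Nat.gcd m n = 1%nat ->
  (k < m)%nat -> (g = cA \/ g = cB) -> (k = 0%nat -> g = cB) ->
  in_Dn n d ->
  ((exists P, in_calP n m k g P /\ data_of n m P d) <-> cond_ab n m k g d).
Proof.
  intros Hm Hmn _ Hk Hg Hk0 HD. split.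
  - intros [P [HcalP [lbl [Hlbl [Hinc [Hall [Hfmap Hclass]]]]]]].
    exact (data_cond_ab n m k g d P lbl Hm Hmn Hk HD HcalP Hlbl Hinc Hall Hfmap Hclass).
  - intros Hab. pose proof HD as [_ [_ [_ [_ [c Hc]]]]].
    exact (realizable n m k g d c Hm Hmn Hk Hg Hk0 HD Hab Hc).
Qed.
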